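(* Let $f:\mathbb{R}^n\to\mathbb{R}\cup\{\infty\}$ be a proper lower semicontinuous function with $\bar x\in\operatorname{dom} f$ and $0\in\partial f(\bar x)$. Suppose $f$ is subdifferentially continuous, prox-regular, and twice epi-differentiable at $\bar x$ for $0$. Then the following are equivalent: (i) $\bar x$ is a strong local minimizer of $f$; (ii) $\bar x$ is a local minimizer of $f$ and $\partial f$ is strongly metrically subregular at $\bar x$ for $0$; (iii) $\langle z,w\rangle>0$ for all $w\in\operatorname{dom}D(\partial f)(\bar x|0)\setminus\{0\}$ and all $z\in D(\partial f)(\bar x|0)(w)$; (iv) there exists $c>0$ such that $\langle z,w\rangle\ge c\|w\|^2$ for all $w\in\operatorname{dom}D(\partial f)(\bar x|0)$ and all $z\in D(\partial f)(\bar x|0)(w)$. Moreover, if one of (i)–(iv) holds, then $$\mathrm{QG}(f;\bar x)=\inf\Big\{\frac{\langle z,w\rangle}{\|w\|^2}\ \Big|\ z\in D(\partial f)(\bar x|0)(w)\Big\}$$ with the convention $0/0=\infty$.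
   Context: Limiting subdifferential $\partial f(\bar x)=\{v\mid (v,-1)\in N_{\operatorname{epi} f}(\bar x,f(\bar x))\}$. Tangent cone $T_\Omega(\bar u)=\{v\mid \exists t_k\downarrow0,\ v_k\to v,\ \bar u+t_kv_k\in\Omega\}$; $D(\partial f)(\bar x|\bar v)(w)=\{z\mid (w,z)\in T_{\operatorname{gph}\partial f}(\bar x,\bar v)\}$. $f$ is prox-regular at $\bar x$ for $\bar v\in\partial f(\bar x)$ if there are $r,\varepsilon>0$ such that $f(x)\ge f(u)+\langle v,x-u\rangle-\frac r2\|x-u\|^2$ whenever $\|x-\bar x\|\le\varepsilon$, $\|u-\bar x\|\le\varepsilon$, $|f(u)-f(\bar x)|<\varepsilon$, $v\in\partial f(u)$, $\|v-\bar v\|\le\varepsilon$. $f$ is subdifferentially continuous at $\bar x$ for $\bar v$ if $(x_k,v_k)\to(\bar x,\bar v)$ with $v_k\in\partial f(x_k)$ implies $f(x_k)\to f(\bar x)$. The second subderivative is $d^2f(\bar x|v)(w)=\liminf_{\tau\downarrow0,\,w'\to w}\frac{f(\bar x+\tau w')-f(\bar x)-\tau\langle v,w'\rangle}{\tau^2/2}$; $f$ is twice epi-differentiable at $\bar x$ for $v$ if for every $w$ and every $\tau_k\downarrow0$ there exist $w^k\to w$ with $\frac{f(\bar x+\tau_kw^k)-f(\bar x)-\tau_k\langle v,w^k\rangle}{\tau_k^2/2}\to d^2f(\bar x|v)(w)$. Strong metric subregularity of $F$ at $\bar x$ for $\bar y$: there are $\kappa>0$ and a neighborhood $U$ of $\bar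 x$ with $d(x;F^{-1}(\bar y))\le\kappa\,d(\bar y;F(x))$ on $U$ and $\bar x$ is isolated in $F^{-1}(\bar y)$. Strong local minimizer with modulus $\kappa$: $f(x)-f(\bar x)\ge\frac\kappa2\|x-\bar x\|^2$ near $\bar x$; $\mathrm{QG}(f;\bar x)$ is the supremum of such $\kappa$. *)

From Stdlib Require Import Reals Lra.
From Stdlib Require Fin.
Open Scope R_scope.

Definition vec (n : nat) := Fin.t n -> R.

Definition vzero {n} : vec n := fun _ => 0.
Definition vadd {n} (x y : vec n) : vec n := fun i => x i + y i.
Definition vsub {n} (x y : vec n) : vec n := fun i => x i - y i.
Definition vscal {n} (a : R) (x : vec n) : vec n := fun i => a * x i.

Fixpoint dot (n : nat) : vec n -> vec n -> R :=
  match n return vec n -> vec n -> R with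
  | O => fun _ _ => 0
  | S m => fun x y => x Fin.F1 * y Fin.F1 +
             dot m (fun i => x (Fin.FS i)) (fun i => y (Fin.FS i))
  end.
Arguments dot {n} x y.

Definition norm {n} (x : vec n) : R := sqrt (dot x x).

Fixpoint splitat (n m : nat) : Fin.t (n + m) -> Fin.t n + Fin.t m :=
  match n return Fin.t (n + m) -> Fin.t n + Fin.t m with
  | O => fun i => inr i
  | S k => fun i => Fin.caseS' i (fun _ => (Fin.t (S k) + Fin.t m)%type)
             (inl Fin.F1)
             (fun j => match splitat k m j with
                       | inl a => inl (Fin.FS a) | inr b => inr b end)
  end.

(** Pairing: R^n x R^m identified with R^(n+m). *)
Definition pairv {n m} (x : vec n) (y : vec m) : vec (n + m) :=
  fun i => match splitat n m i with inl j => x j | inr j => y j end.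

Definition rv (t : R) : vec 1 := fun _ => t.

Definition vconv {n} (u : nat -> vec n) (l : vec n) : Prop :=
  forall eps, eps > 0 -> exists N, forall k, (k >= N)%nat -> norm (vsub (u k) l) < eps.

Definition down_to_0 (t : nat -> R) : Prop :=
  (forall k, t k > 0) /\ Un_cv t 0.

Inductive xreal := MInf | Fin (r : R) | PInf.

Definition xle (a b : xreal) : Prop :=
  match a, b with
  | MInf, _ => True
  | _, PInf => True
  | Fin x, Fin y => x <= y
  | _, _ => False
  end.
Definition xlt (a b : xreal) : Prop := xle a b /\ a <> b.

Definition is_lb (S : xreal -> Prop) (a : xreal) := forall s, S s -> xle a s.
Definition is_ub (S : xreal -> Prop) (a : xreal) := forall s, S s -> xle s a.
Definition is_inf (S : xreal -> Prop) (a : xreal) :=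
  is_lb S a /\ forall b, is_lb S b -> xle b a.
Definition is_sup (S : xreal -> Prop) (a : xreal) :=
  is_ub S a /\ forall b, is_ub S b -> xle a b.

Definition xconv (q : nat -> xreal) (a : xreal) : Prop :=
  match a with
  | Fin l => forall eps, eps > 0 -> exists N, forall k, (k >= N)%nat ->
               exists r, q k = Fin r /\ Rabs (r - l) < eps
  | PInf => forall M, exists N, forall k, (k >= N)%nat -> xlt (Fin M) (q k)
  | MInf => forall M, exists N, forall k, (k >= N)%nat -> xlt (q k) (Fin M)
  end.

Definition dom {n} (f : vec n -> xreal) (x : vec n) : Prop := exists r, f x = Fin r.

Definition proper {n} (f : vec n -> xreal) : Prop :=
  (forall x, f x <> MInf) /\ exists x, dom f x.

Definition lsc {n} (f : vec n -> xreal) : Prop :=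
  forall x (r : R), xlt (Fin r) (f x) ->
    exists d, d > 0 /\ forall y, norm (vsub y x) < d -> xlt (Fin r) (f y).

Definition regular_normal {m} (Om : vec m -> Prop) (u v : vec m) : Prop :=
  Om u /\ forall eps, eps > 0 -> exists d, d > 0 /\
    forall u', Om u' -> norm (vsub u' u) < d ->
      dot v (vsub u' u) <= eps * norm (vsub u' u).

Definition normal_cone {m} (Om : vec m -> Prop) (u v : vec m) : Prop :=
  Om u /\ exists (uk vk : nat -> vec m),
    (forall k, Om (uk k)) /\ vconv uk u /\ vconv vk v /\
    (forall k, regular_normal Om (uk k) (vk k)).

Definition tangent_cone {m} (Om : vec m -> Prop) (u v : vec m) : Prop :=
  exists (t : nat -> R) (vk : nat -> vec m),
    down_to_0 t /\ vconv vk v /\ forall k, Om (vadd u (vscal (t k) (vk k))).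

Definition epi {n} (f : vec n -> xreal) : vec (n + 1) -> Prop :=
  fun p => exists x t, p = pairv x (rv t) /\ xle (f x) (Fin t).

Definition subdiff {n} (f : vec n -> xreal) (x v : vec n) : Prop :=
  exists fx, f x = Fin fx /\
    normal_cone (epi f) (pairv x (rv fx)) (pairv v (rv (-1))).

Definition gph_subdiff {n} (f : vec n -> xreal) : vec (n + n) -> Prop :=
  fun p => exists x v, p = pairv x v /\ subdiff f x v.

(** graphical derivative: z in D(subdiff f)(x|v)(w) *)
Definition gder {n} (f : vec n -> xreal) (x v w z : vec n) : Prop :=
  tangent_cone (gph_subdiff f) (pairv x v) (pairv w z).

Definition gder_dom {n} (f : vec n -> xreal) (x v w : vec n) : Prop :=
  exists z, gder f x v w z.

Definition prox_regular {n} (f : vec n -> xreal) (xb vb : vec n) : Prop :=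
  exists fxb, f xb = Fin fxb /\
  exists r eps, r > 0 /\ eps > 0 /\
    forall x u v fu,
      norm (vsub x xb) <= eps -> norm (vsub u xb) <= eps ->
      f u = Fin fu -> Rabs (fu - fxb) < eps ->
      subdiff f u v -> norm (vsub v vb) <= eps ->
      xle (Fin (fu + dot v (vsub x u) - r / 2 * (norm (vsub x u)) ^ 2)) (f x).

Definition subdiff_continuous {n} (f : vec n -> xreal) (xb vb : vec n) : Prop :=
  exists fxb, f xb = Fin fxb /\
  forall (xk vk : nat -> vec n),
    vconv xk xb -> vconv vk vb -> (forall k, subdiff f (xk k) (vk k)) ->
    xconv (fun k => f (xk k)) (Fin fxb).

Definition quot2 {n} (f : vec n -> xreal) (xb v : vec n) (fxb tau : R) (w : vec n)
  : xreal :=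
  match f (vadd xb (vscal tau w)) with
  | Fin y => Fin ((y - fxb - tau * dot v w) / (tau ^ 2 / 2))
  | PInf => PInf
  | MInf => MInf
  end.

(** a = d^2 f(xb|v)(w) = liminf_{tau -> 0+, w' -> w} quot2, i.e.
    sup_{delta>0} inf { quot2 tau w' | 0<tau<delta, |w'-w|<delta } *)
Definition second_subderiv {n} (f : vec n -> xreal) (xb v w : vec n) (a : xreal)
  : Prop :=
  exists fxb, f xb = Fin fxb /\
  is_sup (fun b => exists d, d > 0 /\
            is_inf (fun q => exists tau w', 0 < tau < d /\
                      norm (vsub w' w) < d /\ q = quot2 f xb v fxb tau w') b) a.

Definition twice_epi_diff {n} (f : vec n -> xreal) (xb v : vec n) : Prop :=
  exists fxb, f xb = Fin fxb /\
  forall (w : vec n) (tau : nat -> R), down_to_0 tau ->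
    exists wk : nat -> vec n, vconv wk w /\
      forall a, second_subderiv f xb v w a ->
        xconv (fun k => quot2 f xb v fxb (tau k) (wk k)) a.

Definition local_min {n} (f : vec n -> xreal) (xb : vec n) : Prop :=
  exists d, d > 0 /\ forall x, norm (vsub x xb) < d -> xle (f xb) (f x).

Definition strong_min_mod {n} (f : vec n -> xreal) (xb : vec n) (kappa : R) : Prop :=
  exists fxb, f xb = Fin fxb /\
  exists d, d > 0 /\ forall x, norm (vsub x xb) < d ->
    xle (Fin (fxb + kappa / 2 * (norm (vsub x xb)) ^ 2)) (f x).

Definition strong_local_min {n} (f : vec n -> xreal) (xb : vec n) : Prop :=
  exists kappa, kappa > 0 /\ strong_min_mod f xb kappa.

Definition is_QG {n} (f : vec n -> xreal) (xb : vec n) (q : xreal) : Prop :=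
  is_sup (fun k => exists kappa, kappa > 0 /\ strong_min_mod f xb kappa /\ k = Fin kappa) q.

(** d = dist(x; A) = inf_{a in A} |x - a| (inf of empty set = +oo) *)
Definition is_dist {n} (x : vec n) (A : vec n -> Prop) (d : xreal) : Prop :=
  is_inf (fun s => exists a, A a /\ s = Fin (norm (vsub x a))) d.

Definition xscal (k : R) (a : xreal) : xreal :=
  match a with Fin r => Fin (k * r) | PInf => PInf | MInf => MInf end.

Definition strong_metric_subreg {n} (F : vec n -> vec n -> Prop) (xb yb : vec n) : Prop :=
  (exists kappa d, kappa > 0 /\ d > 0 /\
     forall x, norm (vsub x xb) < d ->
       forall d1 d2, is_dist x (fun u => F u yb) d1 -> is_dist yb (F x) d2 ->
         xle d1 (xscal kappa d2))
  /\ F xb yb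
  /\ exists d, d > 0 /\ forall x, norm (vsub x xb) < d -> F x yb -> x = xb.

Definition ratio {n} (z w : vec n) : xreal :=
  if Req_EM_T (norm w) 0 then PInf else Fin (dot z w / (norm w) ^ 2).

From Stdlib Require Import Reals Lra Lia FunctionalExtensionality Classical ClassicalEpsilon Rtopology.
From Stdlib Require Fin.
Open Scope R_scope.

(** Throughout, [h w = d^2 f(xb|0)(w)] is the second subderivative.  The proof
  rests on two inequalities between [h] and the graphical derivative
  [D(subdiff f)(xb|0)] of the subdifferential:

  (A) if [z] is in [D(subdiff f)(xb|0)(w)] then [h w <= <z,w>]
      (prox-regularity, subdifferential continuity, twice epi-differentiability);
  (B) if [w0] minimizes [h w - m |w|^2] with minimal value [0], then
      [m w0] is in [D(subdiff f)(xb|0)(w0)]; the subgradients are produced by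
      minimizing [f] plus a quadratic penalty on shrinking balls.

  Quadratic growth with modulus [k] gives [h >= k |.|^2]; conversely, if the
  growth with modulus [k] fails, then [h] is at most [k] somewhere on the unit
  sphere, and a minimizer of [h] over the sphere provides, through (B), a pair
  [(w0, m w0)] in the graph of the graphical derivative with [m <= k].  These
  facts give (i)<->(iii)<->(iv) and the formula for [QG(f;xb)]; strong metric
  subregularity is derived from (iv) by a compactness argument, and conversely
  it forbids [0] in [D(subdiff f)(xb|0)(w)] for [w <> 0], which with (A) and
  (B) yields (ii)->(iii). *)

(** ** Euclidean geometry of [R^n] *)

Ltac vext := apply functional_extensionality; intro; unfold vsub, vadd, vscal, vzero; ring.

Lemma dot_S m (x y : vec (S m)) :
  dot x y = x Fin.F1 * y Fin.F1 + dot (fun i => x (Fin.FS i)) (fun i => y (Fin.FS i)).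
Proof. reflexivity. Qed.

Lemma dot_comm n (x y : vec n) : dot x y = dot y x.
Proof. induction n as [|n IH]; [reflexivity|]. rewrite !dot_S, IH. ring. Qed.

Lemma dot_add_l n (x y z : vec n) : dot (vadd x y) z = dot x z + dot y z.
Proof.
  induction n as [|n IH]; [simpl; ring|].
  rewrite !dot_S, (IH (fun i => x (Fin.FS i)) (fun i => y (Fin.FS i))). unfold vadd. ring.
Qed.

Lemma dot_scal_l n a (x y : vec n) : dot (vscal a x) y = a * dot x y.
Proof.
  induction n as [|n IH]; [simpl; ring|].
  rewrite !dot_S, (IH (fun i => x (Fin.FS i))). unfold vscal. ring.
Qed.

Lemma dot_zero_l n (y : vec n) : dot vzero y = 0.
Proof. induction n as [|n IH]; [reflexivity|]. rewrite dot_S, IH. unfold vzero. ring. Qed.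

Lemma dot_sub_l n (x y z : vec n) : dot (vsub x y) z = dot x z - dot y z.
Proof.
  replace (vsub x y) with (vadd x (vscal (-1) y)) by vext.
  rewrite dot_add_l, dot_scal_l. ring.
Qed.

Lemma dot_add_r n (x y z : vec n) : dot z (vadd x y) = dot z x + dot z y.
Proof. rewrite dot_comm, dot_add_l, (dot_comm _ z x), (dot_comm _ z y). ring. Qed.
Lemma dot_scal_r n a (x y : vec n) : dot y (vscal a x) = a * dot y x.
Proof. rewrite dot_comm, dot_scal_l, dot_comm. ring. Qed.
Lemma dot_sub_r n (x y z : vec n) : dot z (vsub x y) = dot z x - dot z y.
Proof. rewrite dot_comm, dot_sub_l, (dot_comm _ z x), (dot_comm _ z y). ring. Qed.
Lemma dot_zero_r n (y : vec n) : dot y vzero = 0.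
Proof. rewrite dot_comm. apply dot_zero_l. Qed.

Lemma dot_self_nonneg n (x : vec n) : 0 <= dot x x.
Proof.
  induction n as [|n IH]; [simpl; lra|].
  rewrite dot_S. specialize (IH (fun i => x (Fin.FS i))). nra.
Qed.

Lemma dot_self_eq0 n (x : vec n) : dot x x = 0 -> x = vzero.
Proof.
  induction n as [|n IH]; intros H; apply functional_extensionality; intro i.
  - inversion i.
  - rewrite dot_S in H. pose proof (dot_self_nonneg _ (fun i => x (Fin.FS i))) as Hnn.
    assert (Hhead : x Fin.F1 = 0) by nra.
    assert (Htail : (fun i => x (Fin.FS i)) = vzero) by (apply IH; nra).
    clear H Hnn. revert x Hhead Htail. pattern i. apply Fin.caseS'; [auto|].
    intros p x _ Htail. exact (f_equal (fun g => g p) Htail).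
Qed.

Lemma norm_nonneg n (x : vec n) : 0 <= norm x.
Proof. apply sqrt_pos. Qed.
Lemma norm_mul_self n (x : vec n) : norm x * norm x = dot x x.
Proof. apply sqrt_sqrt, dot_self_nonneg. Qed.
Lemma norm_sq n (x : vec n) : norm x ^ 2 = dot x x.
Proof. rewrite <- norm_mul_self. ring. Qed.
Lemma norm_eq0 n (x : vec n) : norm x = 0 -> x = vzero.
Proof. intro H. apply dot_self_eq0. rewrite <- norm_mul_self, H. ring. Qed.
Lemma norm_zero n : norm (@vzero n) = 0.
Proof. unfold norm. rewrite dot_zero_l. apply sqrt_0. Qed.
Lemma norm_pos n (x : vec n) : x <> vzero -> norm x > 0.
Proof.
  intros H. destruct (norm_nonneg _ x) as [|E]; auto. exfalso. apply H, norm_eq0. auto.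
Qed.

Lemma norm_scal n a (x : vec n) : norm (vscal a x) = Rabs a * norm x.
Proof.
  unfold norm. rewrite dot_scal_l, dot_scal_r.
  replace (a * (a * dot x x)) with (Rsqr a * dot x x) by (unfold Rsqr; ring).
  rewrite sqrt_mult_alt by apply Rle_0_sqr. rewrite sqrt_Rsqr_abs. reflexivity.
Qed.

Lemma cauchy_schwarz n (x y : vec n) : Rabs (dot x y) <= norm x * norm y.
Proof.
  destruct (Req_dec (norm x) 0) as [Hx|Hx].
  { apply norm_eq0 in Hx. subst. rewrite dot_zero_l, norm_zero, Rabs_R0. lra. }
  destruct (Req_dec (norm y) 0) as [Hy|Hy].
  { apply norm_eq0 in Hy. subst. rewrite dot_zero_r, norm_zero, Rabs_R0. lra. }
  pose proof (norm_nonneg _ x). pose proof (norm_nonneg _ y).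
  set (a := norm x) in *. set (b := norm y) in *.
  (* expand |b x -+ a y|^2 >= 0 *)
  pose proof (dot_self_nonneg _ (vsub (vscal b x) (vscal a y))) as P1.
  pose proof (dot_self_nonneg _ (vadd (vscal b x) (vscal a y))) as P2.
  rewrite !dot_sub_l, !dot_sub_r, !dot_scal_l, !dot_scal_r in P1.
  rewrite !dot_add_l, !dot_add_r, !dot_scal_l, !dot_scal_r in P2.
  rewrite (dot_comm _ y x) in P1, P2.
  rewrite <- (norm_mul_self _ x), <- (norm_mul_self _ y) in P1, P2. fold a b in P1, P2.
  assert (0 < a * b) by (apply Rmult_lt_0_compat; lra).
  apply Rabs_le. split; nra.
Qed.

Lemma dot_le_norms n (x y : vec n) : dot x y <= norm x * norm y.
Proof. pose proof (cauchy_schwarz _ x y). pose proof (Rle_abs (dot x y)). lra. Qed.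

Lemma norm_triangle n (x y : vec n) : norm (vadd x y) <= norm x + norm y.
Proof.
  pose proof (norm_nonneg _ x). pose proof (norm_nonneg _ y).
  apply Rsqr_incr_0_var; [|lra]. unfold Rsqr. rewrite norm_mul_self.
  rewrite dot_add_l, !dot_add_r, (dot_comm _ y x), <- !norm_mul_self.
  pose proof (dot_le_norms _ x y). nra.
Qed.

Lemma norm_sub_sym n (x y : vec n) : norm (vsub x y) = norm (vsub y x).
Proof.
  replace (vsub x y) with (vscal (-1) (vsub y x)) by vext.
  rewrite norm_scal, Rabs_left by lra. ring.
Qed.

Lemma norm_sub_triangle n (x y z : vec n) :
  norm (vsub x z) <= norm (vsub x y) + norm (vsub y z).
Proof. replace (vsub x z) with (vadd (vsub x y) (vsub y z)) by vext. apply norm_triangle. Qed.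

Lemma vsub_zero_r n (x : vec n) : vsub x vzero = x.
Proof. vext. Qed.

Lemma vsub_self n (x : vec n) : vsub x x = vzero.
Proof. vext. Qed.

Lemma norm_reverse_triangle n (x y : vec n) : Rabs (norm x - norm y) <= norm (vsub x y).
Proof.
  pose proof (norm_sub_triangle _ x y vzero). pose proof (norm_sub_triangle _ y x vzero).
  rewrite !vsub_zero_r in *. rewrite (norm_sub_sym _ y x) in *. apply Rabs_le. lra.
Qed.

Lemma norm_le_of_near n (w w0 : vec n) e : norm (vsub w w0) < e -> norm w <= norm w0 + e.
Proof.
  intro H. pose proof (norm_sub_triangle _ w w0 vzero). rewrite !vsub_zero_r in *. lra.
Qed.

Lemma vsub_eq0 n (x y : vec n) : vsub x y = vzero -> x = y.
Proof.
  intro H. apply functional_extensionality; intro i.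
  assert (E : vsub x y i = 0) by (rewrite H; auto). unfold vsub in E. lra.
Qed.

Lemma norm_add_sq n (a b : vec n) :
  norm (vadd a b) ^ 2 = norm a ^ 2 + 2 * dot a b + norm b ^ 2.
Proof. rewrite !norm_sq, dot_add_l, !dot_add_r, (dot_comm _ b a). ring. Qed.

Lemma vsub_add_scal n (xb w : vec n) t : vsub (vadd xb (vscal t w)) xb = vscal t w.
Proof. vext. Qed.

Lemma norm_normalize n (v : vec n) : norm v > 0 -> norm (vscal (/ norm v) v) = 1.
Proof.
  intro Hv. rewrite norm_scal, Rabs_right. field. lra.
  apply Rle_ge, Rlt_le, Rinv_0_lt_compat; auto.
Qed.

Lemma dot_unit n (w : vec n) m : norm w = 1 -> dot (vscal m w) w = m.
Proof. intro Hw. rewrite dot_scal_l, <- norm_mul_self, Hw. ring. Qed.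

Lemma unit_neq0 n (w : vec n) : norm w = 1 -> w <> vzero.
Proof. intros Hw E. rewrite E, norm_zero in Hw. lra. Qed.

Lemma sq_norm_continuous n (w : vec n) C eta : eta > 0 -> exists d, d > 0 /\
  forall w', norm (vsub w' w) < d -> Rabs (C * norm w' ^ 2 - C * norm w ^ 2) < eta.
Proof.
  intros He. pose proof (norm_nonneg _ w). pose proof (Rabs_pos C).
  set (K := (Rabs C + 1) * (2 * norm w + 1)). assert (HK : K > 0) by (unfold K; nra).
  exists (Rmin 1 (eta / K)). split; [apply Rmin_pos; [lra|apply Rdiv_lt_0_compat; lra]|].
  intros w' Hw'. pose proof (Rmin_l 1 (eta / K)). pose proof (Rmin_r 1 (eta / K)).
  pose proof (norm_reverse_triangle _ w' w). pose proof (norm_nonneg _ w').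
  assert (Hdiff : Rabs (norm w' - norm w) < eta / K) by lra.
  assert (Hsum : Rabs (norm w' + norm w) <= 2 * norm w + 1).
  { rewrite Rabs_right by lra. pose proof (Rle_abs (norm w' - norm w)). lra. }
  replace (C * norm w' ^ 2 - C * norm w ^ 2)
    with (C * ((norm w' - norm w) * (norm w' + norm w))) by ring.
  rewrite !Rabs_mult. pose proof (Rabs_pos (norm w' - norm w)).
  pose proof (Rabs_pos (norm w' + norm w)).
  apply Rle_lt_trans with ((Rabs C + 1) * (Rabs (norm w' - norm w) * (2 * norm w + 1))).
  { apply Rle_trans with (Rabs C * (Rabs (norm w' - norm w) * (2 * norm w + 1))).
    - apply Rmult_le_compat_l; [lra|]. apply Rmult_le_compat_l; lra.
    - apply Rmult_le_compat_r; nra. }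
  replace eta with (K * (eta / K)) by (field; lra).
  replace ((Rabs C + 1) * (Rabs (norm w' - norm w) * (2 * norm w + 1)))
    with (K * Rabs (norm w' - norm w)) by (unfold K; ring).
  apply Rmult_lt_compat_l; lra.
Qed.

(** ** The product space [R^n x R^m = R^(n+m)] *)

Lemma splitat_L n m (i : Fin.t n) : splitat n m (Fin.L m i) = inl i.
Proof. induction i as [|k i IH]; [reflexivity|]. simpl. rewrite IH. reflexivity. Qed.

Lemma splitat_R n m (j : Fin.t m) : splitat n m (Fin.R n j) = inr j.
Proof. induction n as [|n IH]; [reflexivity|]. simpl. rewrite IH. reflexivity. Qed.

Lemma fin_case k (i : Fin.t (S k)) : i = Fin.F1 \/ exists p, i = Fin.FS p.
Proof. apply (Fin.caseS' i (fun i => i = Fin.F1 \/ exists p, i = Fin.FS p)); eauto. Qed.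

Lemma splitat_inv n m (i : Fin.t (n + m)) :
  match splitat n m i with inl j => i = Fin.L m j | inr j => i = Fin.R n j end.
Proof.
  revert i. induction n as [|n IH]; [intro; reflexivity|].
  intro i. destruct (fin_case (n + m) i) as [->|[p ->]]; [reflexivity|].
  simpl. specialize (IH p). destruct (splitat n m p); subst; reflexivity.
Qed.

Definition fstv {n m} (p : vec (n + m)) : vec n := fun i => p (Fin.L m i).
Definition sndv {n m} (p : vec (n + m)) : vec m := fun j => p (Fin.R n j).

Lemma fst_pairv n m (a : vec n) (b : vec m) : fstv (pairv a b) = a.
Proof. apply functional_extensionality; intro i. unfold fstv, pairv. rewrite splitat_L. auto. Qed.
Lemma snd_pairv n m (a : vec n) (b : vec m) : sndv (pairv a b) = b.
Proof. apply functional_extensionality; intro i. unfold sndv, pairv. rewrite splitat_R. auto. Qed.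
Lemma pairv_eta n m (p : vec (n + m)) : pairv (fstv p) (sndv p) = p.
Proof.
  apply functional_extensionality; intro i. unfold fstv, sndv, pairv.
  pose proof (splitat_inv n m i). destruct (splitat n m i); subst; auto.
Qed.

Lemma dot_pairv n m (a c : vec n) (b d : vec m) :
  dot (pairv a b) (pairv c d) = dot a c + dot b d.
Proof.
  induction n as [|n IH]. { transitivity (dot b d); [reflexivity|simpl; ring]. }
  assert (Etail : forall (a : vec (S n)) (b : vec m),
    (fun i => pairv a b (Fin.FS i)) = pairv (fun i => a (Fin.FS i)) b).
  { intros. apply functional_extensionality; intro i. unfold pairv. simpl.
    destruct (splitat n m i); auto. }
  change (dot (pairv a b) (pairv c d)) with
    (a Fin.F1 * c Fin.F1 + dot (fun i => pairv a b (Fin.FS i)) (fun i => pairv c d (Fin.FS i))).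
  rewrite !Etail, IH, dot_S. ring.
Qed.

Lemma pairv_add n m (a c : vec n) (b d : vec m) :
  vadd (pairv a b) (pairv c d) = pairv (vadd a c) (vadd b d).
Proof. apply functional_extensionality; intro i. unfold pairv, vadd. destruct (splitat n m i); auto. Qed.
Lemma pairv_sub n m (a c : vec n) (b d : vec m) :
  vsub (pairv a b) (pairv c d) = pairv (vsub a c) (vsub b d).
Proof. apply functional_extensionality; intro i. unfold pairv, vsub. destruct (splitat n m i); auto. Qed.
Lemma pairv_scal n m t (a : vec n) (b : vec m) :
  vscal t (pairv a b) = pairv (vscal t a) (vscal t b).
Proof. apply functional_extensionality; intro i. unfold pairv, vscal. destruct (splitat n m i); auto. Qed.

Lemma norm_pairv_sq n m (a : vec n) (b : vec m) :
  norm (pairv a b) ^ 2 = norm a ^ 2 + norm b ^ 2.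
Proof. rewrite !norm_sq. apply dot_pairv. Qed.

Lemma norm_pairv_bounds n m (a : vec n) (b : vec m) :
  norm a <= norm (pairv a b) /\ norm b <= norm (pairv a b) /\ norm (pairv a b) <= norm a + norm b.
Proof.
  pose proof (norm_pairv_sq _ _ a b). pose proof (norm_nonneg _ a).
  pose proof (norm_nonneg _ b). pose proof (norm_nonneg _ (pairv a b)).
  split; [|split]; apply Rsqr_incr_0_var; unfold Rsqr; nra.
Qed.

Lemma dot_rv s t : dot (rv s) (rv t) = s * t.
Proof. simpl. unfold rv. ring. Qed.

Lemma vsub_rv t s : vsub (rv t) (rv s) = rv (t - s).
Proof. apply functional_extensionality; intro; reflexivity. Qed.

(** ** Sequences, subsequences and compactness in [R^n] *)

Definition subseq (phi : nat -> nat) := forall j, (phi j < phi (S j))%nat.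

Lemma subseq_ge phi : subseq phi -> forall j, (j <= phi j)%nat.
Proof. intros H j. induction j as [|j IH]; [lia|]. specialize (H j). lia. Qed.

Lemma subseq_mono phi : subseq phi -> forall i j, (i <= j)%nat -> (phi i <= phi j)%nat.
Proof. intros H i j Hij. induction Hij as [|j Hij IH]; [lia|]. specialize (H j). lia. Qed.

Lemma subseq_comp phi psi : subseq phi -> subseq psi -> subseq (fun j => phi (psi j)).
Proof.
  intros H1 H2 j. pose proof (subseq_mono phi H1 (S (psi j)) (psi (S j)) (H2 j)).
  specialize (H1 (psi j)). lia.
Qed.

Lemma extract_subseq (P : nat -> nat -> Prop) :
  (forall j N, exists k, (N <= k)%nat /\ P j k) -> exists psi, subseq psi /\ forall j, P j (psi j).
Proof.
  intro H. destruct (choice (fun jN k => (snd jN <= k)%nat /\ P (fst jN) k)) as [g Hg].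
  { intros [j N]. apply H. }
  set (psi := fix psi j := match j with O => g (O, O) | S j' => g (S j', S (psi j')) end).
  exists psi. split.
  - intro j. simpl. destruct (Hg (S j, S (psi j))) as [Hle _]. simpl in Hle. lia.
  - intros [|j]; [apply (Hg (O, O))|apply (Hg (S j, S (psi j)))].
Qed.

Lemma Un_cv_subseq u l phi : Un_cv u l -> subseq phi -> Un_cv (fun j => u (phi j)) l.
Proof.
  intros H Hp eps He. destruct (H eps He) as [N HN]. exists N. intros j Hj.
  apply HN. pose proof (subseq_ge phi Hp j). lia.
Qed.

Lemma vconv_subseq n (u : nat -> vec n) l phi :
  vconv u l -> subseq phi -> vconv (fun j => u (phi j)) l.
Proof.
  intros H Hp eps He. destruct (H eps He) as [N HN]. exists N. intros j Hj.
  apply HN. pose proof (subseq_ge phi Hp j). lia.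
Qed.

Lemma Un_cv_const c : Un_cv (fun _ => c) c.
Proof. intros e He. exists O. intros. unfold R_dist. rewrite Rminus_diag, Rabs_R0. lra. Qed.

Lemma Un_cv_lower_bound (u : nat -> R) l e : Un_cv u l -> (forall j, e <= u j) -> e <= l.
Proof.
  intros Hu He. apply Rnot_lt_le. intro Hlt. destruct (Hu (e - l)) as [N HN]; [lra|].
  specialize (HN N ltac:(lia)). specialize (He N). unfold R_dist in HN.
  apply Rabs_def2 in HN. lra.
Qed.

Lemma Un_cv_squeeze0 (x y : nat -> R) :
  (forall k, 0 <= x k <= y k) -> Un_cv y 0 -> Un_cv x 0.
Proof.
  intros Hxy Hy e He. destruct (Hy e He) as [N HN]. exists N. intros k Hk.
  specialize (HN k Hk). specialize (Hxy k). unfold R_dist in *. rewrite Rminus_0_r in *.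
  rewrite Rabs_right in * by lra. lra.
Qed.

Lemma bolzano_weierstrass_R (u : nat -> R) M : (forall k, Rabs (u k) <= M) ->
  exists phi l, subseq phi /\ Un_cv (fun j => u (phi j)) l.
Proof.
  intro HM.
  destruct (Bolzano_Weierstrass u (fun c => -M <= c <= M) (compact_P3 _ _)) as [l Hl].
  { intro k. specialize (HM k).
    pose proof (Rle_abs (u k)). pose proof (Rle_abs (- u k)). rewrite Rabs_Ropp in *. lra. }
  destruct (extract_subseq (fun j p => Rabs (u p - l) < / INR (S j))) as [phi [Hphi Hclose]].
  { intros j N. assert (Hp : 0 < / INR (S j)) by (apply Rinv_0_lt_compat, lt_0_INR; lia).
    destruct (Hl (disc l (mkposreal _ Hp)) N) as [p [Hp1 Hp2]]; [|exists p; auto].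
    exists (mkposreal _ Hp). intros y Hy. exact Hy. }
  exists phi, l. split; auto.
  intros eps He. destruct (archimed_cor1 eps He) as [N [HN1 HN2]].
  exists N. intros j Hj. unfold R_dist.
  eapply Rlt_trans; [apply Hclose|]. eapply Rle_lt_trans; [|apply HN1].
  apply Rinv_le_contravar; [apply lt_0_INR; lia|apply le_INR; lia].
Qed.

Definition vtail {n} (x : vec (S n)) : vec n := fun i => x (Fin.FS i).
Definition vcons {n} (a : R) (t : vec n) : vec (S n) :=
  fun i => Fin.caseS' i (fun _ => R) a t.

Lemma norm_head_tail n (x : vec (S n)) :
  Rabs (x Fin.F1) <= norm x /\ norm (vtail x) <= norm x /\
  norm x <= Rabs (x Fin.F1) + norm (vtail x).
Proof.
  assert (E : norm x ^ 2 = Rabs (x Fin.F1) ^ 2 + norm (vtail x) ^ 2).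
  { rewrite !norm_sq, dot_S, pow2_abs. unfold vtail. ring. }
  pose proof (norm_nonneg _ x). pose proof (norm_nonneg _ (vtail x)).
  pose proof (Rabs_pos (x Fin.F1)).
  split; [|split]; apply Rsqr_incr_0_var; unfold Rsqr; nra.
Qed.

Lemma norm_vec0 (x : vec 0) : norm x = 0.
Proof. unfold norm. simpl. apply sqrt_0. Qed.

Lemma bolzano_weierstrass n (u : nat -> vec n) M : (forall k, norm (u k) <= M) ->
  exists phi l, subseq phi /\ vconv (fun j => u (phi j)) l.
Proof.
  revert u M. induction n as [|n IH]; intros u M HM.
  - exists (fun j => j), vzero. split; [intro; lia|].
    intros eps He. exists O. intros. rewrite norm_vec0. lra.
  - destruct (bolzano_weierstrass_R (fun k => u k Fin.F1) M) as [phi1 [l1 [Hp1 Hc1]]].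
    { intro k. eapply Rle_trans; [apply norm_head_tail|apply HM]. }
    destruct (IH (fun j => vtail (u (phi1 j))) M) as [phi2 [l2 [Hp2 Hc2]]].
    { intro k. eapply Rle_trans; [apply norm_head_tail|apply HM]. }
    exists (fun j => phi1 (phi2 j)), (vcons l1 l2). split; [apply subseq_comp; auto|].
    intros eps He. pose proof (Un_cv_subseq _ _ _ Hc1 Hp2) as Hc1'.
    destruct (Hc1' (eps/2)) as [N1 HN1]; [lra|]. destruct (Hc2 (eps/2)) as [N2 HN2]; [lra|].
    exists (max N1 N2). intros k Hk. eapply Rle_lt_trans; [apply norm_head_tail|].
    specialize (HN1 k ltac:(lia)). specialize (HN2 k ltac:(lia)). unfold R_dist in HN1.
    change (vsub (u (phi1 (phi2 k))) (vcons l1 l2) Fin.F1) with (u (phi1 (phi2 k)) Fin.F1 - l1).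
    change (vtail (vsub (u (phi1 (phi2 k))) (vcons l1 l2)))
      with (vsub (vtail (u (phi1 (phi2 k)))) l2).
    lra.
Qed.

Lemma vconv_iff n (u : nat -> vec n) l : vconv u l <-> Un_cv (fun k => norm (vsub (u k) l)) 0.
Proof.
  unfold vconv, Un_cv, R_dist.
  split; intros H eps He; destruct (H eps He) as [N HN]; exists N; intros k Hk;
    specialize (HN k Hk); rewrite Rminus_0_r, Rabs_right in *; auto;
    apply Rle_ge, norm_nonneg.
Qed.

Lemma vconv_const n (l : vec n) : vconv (fun _ => l) l.
Proof. intros eps He. exists O. intros. rewrite vsub_self, norm_zero. lra. Qed.

Lemma vconv_norm n (u : nat -> vec n) l : vconv u l -> Un_cv (fun k => norm (u k)) (norm l).
Proof.
  intros H eps He. destruct (H eps He) as [N HN]. exists N. intros k Hk. unfold R_dist.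
  eapply Rle_lt_trans; [apply norm_reverse_triangle|]. auto.
Qed.

Lemma vconv_unit_limit n (u : nat -> vec n) w : vconv u w -> (forall k, norm (u k) = 1) -> norm w = 1.
Proof.
  intros Hcv Hu. apply (UL_sequence (fun k => norm (u k))); [apply vconv_norm; auto|].
  replace (fun k => norm (u k)) with (fun _ : nat => 1)
    by (apply functional_extensionality; intro; rewrite Hu; auto).
  apply Un_cv_const.
Qed.

Lemma directions_cluster n (xb : vec n) (xs : nat -> vec n) :
  (forall k, norm (vsub (xs k) xb) > 0) ->
  exists phi w, subseq phi /\ norm w = 1 /\
    vconv (fun j => vscal (/ norm (vsub (xs (phi j)) xb)) (vsub (xs (phi j)) xb)) w.
Proof.
  intro Hd. set (u := fun k => vscal (/ norm (vsub (xs k) xb)) (vsub (xs k) xb)).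
  assert (Hu : forall k, norm (u k) = 1) by (intro k; apply norm_normalize, Hd).
  destruct (bolzano_weierstrass n u 1) as [phi [w [Hphi Hcv]]]; [intro k; rewrite Hu; lra|].
  exists phi, w. split; auto. split; auto. apply (vconv_unit_limit _ _ _ Hcv). intro; apply Hu.
Qed.

Lemma recompose_direction n (xb x : vec n) d : d <> 0 -> vadd xb (vscal d (vscal (/ d) (vsub x xb))) = x.
Proof. intro Hd. apply functional_extensionality; intro i. unfold vadd, vscal, vsub. field. auto. Qed.

Lemma vconv_add n (u v : nat -> vec n) a b :
  vconv u a -> vconv v b -> vconv (fun k => vadd (u k) (v k)) (vadd a b).
Proof.
  rewrite !vconv_iff. intros Hu Hv.
  apply (Un_cv_squeeze0 _ (fun k => norm (vsub (u k) a) + norm (vsub (v k) b))).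
  - intro k. split; [apply norm_nonneg|].
    replace (vsub (vadd (u k) (v k)) (vadd a b)) with (vadd (vsub (u k) a) (vsub (v k) b)) by vext.
    apply norm_triangle.
  - replace 0 with (0 + 0) by ring. apply CV_plus; auto.
Qed.

Lemma vconv_scal n (u : nat -> vec n) a (t : nat -> R) c : vconv u a -> Un_cv t c ->
  vconv (fun k => vscal (t k) (u k)) (vscal c a).
Proof.
  rewrite !vconv_iff. intros Hu Ht.
  apply (Un_cv_squeeze0 _ (fun k => Rabs (t k) * norm (vsub (u k) a) + Rabs (t k - c) * norm a)).
  - intro k. split; [apply norm_nonneg|].
    replace (vsub (vscal (t k) (u k)) (vscal c a))
      with (vadd (vscal (t k) (vsub (u k) a)) (vscal (t k - c) a)) by vext.
    rewrite <- !norm_scal. apply norm_triangle.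
  - replace 0 with (Rabs c * 0 + Rabs 0 * norm a) by (rewrite Rabs_R0; ring).
    apply CV_plus; apply CV_mult; auto using Un_cv_const.
    + apply cv_cvabs; auto.
    + apply cv_cvabs. replace 0 with (c - c) by ring. apply CV_minus; auto using Un_cv_const.
Qed.

Lemma vconv_scal_const n (u : nat -> vec n) a c :
  vconv u a -> vconv (fun k => vscal c (u k)) (vscal c a).
Proof. intros. apply (vconv_scal _ u a (fun _ => c) c); auto using Un_cv_const. Qed.

Lemma vconv_sub n (u v : nat -> vec n) a b :
  vconv u a -> vconv v b -> vconv (fun k => vsub (u k) (v k)) (vsub a b).
Proof.
  intros Hu Hv. replace (vsub a b) with (vadd a (vscal (-1) b)) by vext.
  replace (fun k => vsub (u k) (v k)) with (fun k => vadd (u k) (vscal (-1) (v k)))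
    by (apply functional_extensionality; intro; vext).
  apply vconv_add; auto. apply vconv_scal_const; auto.
Qed.

Lemma dot_cv n (a b : nat -> vec n) x y :
  vconv a x -> vconv b y -> Un_cv (fun k => dot (a k) (b k)) (dot x y).
Proof.
  rewrite !vconv_iff. intros Ha Hb.
  assert (Hd : Un_cv (fun k => Rabs (dot (a k) (b k) - dot x y)) 0).
  { apply (Un_cv_squeeze0 _ (fun k => norm (vsub (a k) x) * norm (vsub (b k) y)
           + norm (vsub (a k) x) * norm y + norm x * norm (vsub (b k) y))).
    - intro k. split; [apply Rabs_pos|].
      replace (dot (a k) (b k) - dot x y) with (dot (vsub (a k) x) (vsub (b k) y)
        + dot (vsub (a k) x) y + dot x (vsub (b k) y)) by (rewrite !dot_sub_l, !dot_sub_r; ring).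
      eapply Rle_trans; [apply Rabs_triang|]. apply Rplus_le_compat;
        [eapply Rle_trans; [apply Rabs_triang|]; apply Rplus_le_compat|]; apply cauchy_schwarz.
    - replace 0 with (0 * 0 + 0 * norm y + norm x * 0) by ring.
      repeat apply CV_plus; repeat apply CV_mult; auto using Un_cv_const. }
  intros e He. destruct (Hd e He) as [N HN]. exists N. intros k Hk. specialize (HN k Hk).
  unfold R_dist in *. rewrite Rminus_0_r, Rabs_Rabsolu in HN. auto.
Qed.

Lemma norm_sq_cv n (a : nat -> vec n) x :
  vconv a x -> Un_cv (fun k => norm (a k) ^ 2) (norm x ^ 2).
Proof.
  intro H. replace (fun k => norm (a k) ^ 2) with (fun k => dot (a k) (a k))
    by (apply functional_extensionality; intro; symmetry; apply norm_sq).
  rewrite norm_sq. apply dot_cv; auto.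
Qed.

Lemma Un_cv_shift (u : nat -> R) l K : Un_cv u l -> Un_cv (fun k => u (K + k)%nat) l.
Proof. intros H e He. destruct (H e He) as [N HN]. exists N. intros k Hk. apply HN. lia. Qed.
Lemma vconv_shift n (u : nat -> vec n) l K : vconv u l -> vconv (fun k => u (K + k)%nat) l.
Proof. intros H e He. destruct (H e He) as [N HN]. exists N. intros k Hk. apply HN. lia. Qed.

Lemma vconv_along_direction n (xb : vec n) (t : nat -> R) (wk : nat -> vec n) w :
  Un_cv t 0 -> vconv wk w -> vconv (fun k => vadd xb (vscal (t k) (wk k))) xb.
Proof.
  intros Ht Hw.
  pose proof (vconv_add _ _ _ _ _ (vconv_const _ xb) (vconv_scal _ _ _ _ _ Hw Ht)) as H.
  replace (vadd xb (vscal 0 w)) with xb in H by vext. exact H.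
Qed.

Lemma vconv_shrink n (t : nat -> R) (zk : nat -> vec n) z :
  Un_cv t 0 -> vconv zk z -> vconv (fun k => vscal (t k) (zk k)) vzero.
Proof. intros Ht Hz. replace vzero with (vscal 0 z) by vext. apply vconv_scal; auto. Qed.

Definition tk (k : nat) := / INR (S k).

Lemma tk_pos k : tk k > 0.
Proof. unfold tk. apply Rinv_0_lt_compat, lt_0_INR. lia. Qed.

Lemma tk_le1 k : tk k <= 1.
Proof.
  unfold tk. rewrite <- Rinv_1. apply Rinv_le_contravar; [lra|].
  rewrite S_INR. pose proof (pos_INR k). lra.
Qed.

Lemma tk_cv : Un_cv tk 0.
Proof.
  intros e He. destruct (archimed_cor1 e He) as [N [HN1 HN2]]. exists N. intros k Hk.
  unfold R_dist. rewrite Rminus_0_r, Rabs_right by (apply Rle_ge, Rlt_le, tk_pos).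
  eapply Rle_lt_trans; [|apply HN1]. unfold tk.
  apply Rinv_le_contravar; [apply lt_0_INR; lia|apply le_INR; lia].
Qed.

Lemma down_tk : down_to_0 tk.
Proof. split; [apply tk_pos|apply tk_cv]. Qed.

Lemma down_scal c (t : nat -> R) : c > 0 -> down_to_0 t -> down_to_0 (fun k => c * t k).
Proof.
  intros Hc [H1 H2]. split; [intro k; specialize (H1 k); nra|].
  replace 0 with (c * 0) by ring. apply CV_mult; auto using Un_cv_const.
Qed.

Lemma Un_cv_dominated (u t : nat -> R) : (forall k, 0 < u k < t k) -> Un_cv t 0 -> Un_cv u 0.
Proof. intros H Ht. apply (Un_cv_squeeze0 _ t); auto. intro k. specialize (H k). lra. Qed.

Lemma vconv_of_cluster_points n (u : nat -> vec n) M w0 :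
  (forall k, norm (u k) <= M) ->
  (forall phi l, subseq phi -> vconv (fun j => u (phi j)) l -> l = w0) ->
  vconv u w0.
Proof.
  intros HM Hcl e He. apply NNPP. intro Hn.
  destruct (extract_subseq (fun _ k => e <= norm (vsub (u k) w0))) as [psi [Hpsi Hfar]].
  { intros _ N. apply NNPP. intro Hn2. apply Hn. exists N. intros k Hk.
    apply Rnot_le_lt. intro Hle. apply Hn2. exists k. split; [lia|auto]. }
  destruct (bolzano_weierstrass n (fun j => u (psi j)) M) as [phi [l [Hphi Hcv]]]; [intro; apply HM|].
  assert (El : l = w0) by exact (Hcl _ _ (subseq_comp psi phi Hpsi Hphi) Hcv).
  assert (Hd : e <= norm (vsub l w0)).
  { apply (Un_cv_lower_bound (fun j => norm (vsub (u (psi (phi j))) w0))); [|intro; apply Hfar].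
    apply vconv_norm, vconv_sub; [exact Hcv|apply vconv_const]. }
  rewrite El, vsub_self, norm_zero in Hd. lra.
Qed.

(** ** Extended reals *)

Lemma xle_trans a b c : xle a b -> xle b c -> xle a c.
Proof. destruct a, b, c; simpl; auto; try tauto; lra. Qed.
Lemma xle_antisym a b : xle a b -> xle b a -> a = b.
Proof. destruct a, b; simpl; try tauto; intros; f_equal; lra. Qed.
Lemma xle_PInf a : xle a PInf.
Proof. destruct a; simpl; auto. Qed.
Lemma xle_MInf a : xle MInf a.
Proof. destruct a; simpl; auto. Qed.
Lemma xle_total a b : xle a b \/ xle b a.
Proof. destruct a, b; simpl; auto. lra. Qed.

Lemma xlt_Fin_iff a e :
  xlt (Fin a) e <-> match e with Fin y => a < y | PInf => True | MInf => False end.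
Proof.
  unfold xlt. destruct e; simpl; split; intros H; try tauto.
  - destruct H as [[H1|H1] H2]; [auto|subst; tauto].
  - split; [lra|intro E; injection E; lra].
  - split; [auto|discriminate].
Qed.

Lemma not_xle_Fin c e : ~ xle (Fin c) e -> e <> MInf -> exists y, e = Fin y /\ y < c.
Proof.
  intros H1 H2. destruct e as [|y|]; [contradiction| |].
  - exists y. simpl in H1. split; [auto|lra].
  - exfalso. apply H1. simpl. auto.
Qed.

Lemma xle_approx_above a c : (forall eta, eta > 0 -> xle a (Fin (c + eta))) -> xle a (Fin c).
Proof.
  intro H. destruct a as [|r|]; simpl; auto.
  - destruct (Rle_dec r c); auto. specialize (H ((r - c)/2)). simpl in H. lra.
  - apply (H 1). lra.
Qed.
Lemma xle_approx_below a c : (forall eta, eta > 0 -> xle (Fin (c - eta)) a) -> xle (Fin c) a.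
Proof.
  intro H. destruct a as [|r|]; simpl; auto.
  - apply (H 1). lra.
  - destruct (Rle_dec c r); auto. specialize (H ((c - r)/2)). simpl in H. lra.
Qed.

Lemma sup_exists (S : xreal -> Prop) : exists a, is_sup S a.
Proof.
  destruct (classic (S PInf)) as [HP|HP].
  { exists PInf. split; [intros s _; apply xle_PInf|]. intros b Hb. apply Hb, HP. }
  destruct (classic (exists r, S (Fin r))) as [[r0 Hr0]|HE].
  2:{ exists MInf. split; [|intros; apply xle_MInf].
      intros s Hs. destruct s; simpl; auto. apply HE; eauto. }
  destruct (classic (exists M, forall r, S (Fin r) -> r <= M)) as [[M HM]|HU].
  - destruct (completeness (fun r => S (Fin r))) as [l [Hl1 Hl2]];
      [exists M; intros r Hr; apply HM, Hr|eauto|].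
    exists (Fin l). split.
    + intros s Hs. destruct s; simpl; auto; try contradiction.
    + intros b Hb. destruct b; simpl; auto.
      * exact (Hb _ Hr0).
      * apply Hl2. intros x Hx. exact (Hb _ Hx).
  - exists PInf. split; [intros s _; apply xle_PInf|].
    intros b Hb. destruct b; simpl; auto.
    + exact (Hb _ Hr0).
    + apply HU. exists r. intros x Hx. exact (Hb _ Hx).
Qed.

Definition xneg (a : xreal) := match a with MInf => PInf | Fin r => Fin (- r) | PInf => MInf end.
Lemma xneg_invol a : xneg (xneg a) = a.
Proof. destruct a; simpl; auto. f_equal; ring. Qed.
Lemma xle_neg a b : xle (xneg a) (xneg b) <-> xle b a.
Proof. destruct a, b; simpl; try tauto; lra. Qed.

Lemma inf_exists (S : xreal -> Prop) : exists a, is_inf S a.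
Proof.
  destruct (sup_exists (fun s => S (xneg s))) as [a [H1 H2]].
  exists (xneg a). split.
  - intros s Hs. rewrite <- (xneg_invol s). apply xle_neg. apply H1. rewrite xneg_invol. auto.
  - intros b Hb. rewrite <- (xneg_invol b). apply xle_neg. apply H2. intros s Hs.
    rewrite <- (xneg_invol s). apply xle_neg. apply Hb. auto.
Qed.

Lemma inf_approx (S : xreal -> Prop) mu eta :
  is_inf S (Fin mu) -> eta > 0 -> exists s, S s /\ xle s (Fin (mu + eta)).
Proof.
  intros [Hlb Hglb] He. apply NNPP. intro Hn.
  assert (Hle : xle (Fin (mu + eta)) (Fin mu)).
  { apply Hglb. intros s Hs. destruct (xle_total s (Fin (mu + eta))); eauto. exfalso; eauto. }
  simpl in Hle. lra.
Qed.

Definition xaddr (e : xreal) (s : R) := match e with Fin y => Fin (y + s) | o => o end.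

(** ** Lower semicontinuous functions attain their minimum on closed balls *)

Lemma closed_ball_limit n (u : nat -> vec n) l a rho :
  vconv u l -> (forall k, norm (vsub (u k) a) <= rho) -> norm (vsub l a) <= rho.
Proof.
  intros Hu Hb. apply Rnot_lt_le. intro Hlt.
  destruct (Hu (norm (vsub l a) - rho)) as [N HN]; [lra|].
  specialize (HN N ltac:(lia)). specialize (Hb N).
  pose proof (norm_sub_triangle _ l (u N) a). rewrite norm_sub_sym in HN. lra.
Qed.

Lemma lsc_add_continuous n (g : vec n -> xreal) (c : vec n -> R) :
  lsc g ->
  (forall x eta, eta > 0 -> exists d, d > 0 /\
     forall y, norm (vsub y x) < d -> Rabs (c y - c x) < eta) ->
  lsc (fun x => xaddr (g x) (c x)).
Proof.
  intros Hg Hc x l Hl. apply xlt_Fin_iff in Hl.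
  (* choose a level [a] of [g] at [x] with margin [eta] for the oscillation of [c] *)
  assert (Hlev : exists a eta, eta > 0 /\ xlt (Fin a) (g x) /\ l <= a + c x - eta).
  { destruct (g x) as [|gx|]; simpl in Hl; [tauto| |].
    - exists (gx - (gx + c x - l)/2), ((gx + c x - l)/4).
      split; [lra|]. split; [apply xlt_Fin_iff; lra|lra].
    - exists (l - c x + 1), 1. split; [lra|]. split; [apply xlt_Fin_iff; auto|lra]. }
  destruct Hlev as [a [eta [Heta [Ha Hal]]]].
  destruct (Hg x a Ha) as [d1 [Hd1 H1]]. destruct (Hc x eta Heta) as [d2 [Hd2 H2]].
  exists (Rmin d1 d2). split; [apply Rmin_pos; auto|]. intros y Hy.
  pose proof (Rmin_l d1 d2). pose proof (Rmin_r d1 d2).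
  specialize (H1 y ltac:(lra)). specialize (H2 y ltac:(lra)). apply Rabs_def2 in H2.
  apply xlt_Fin_iff in H1. apply xlt_Fin_iff. destruct (g y); simpl in *; auto. lra.
Qed.

Lemma lsc_min_on_ball n (G : vec n -> xreal) (a : vec n) (rho L : R) :
  lsc G -> (forall x, norm (vsub x a) <= rho -> xle (Fin L) (G x)) ->
  (exists x0, norm (vsub x0 a) <= rho /\ G x0 <> PInf) ->
  exists xs, norm (vsub xs a) <= rho /\
    forall x, norm (vsub x a) <= rho -> xle (G xs) (G x).
Proof.
  intros Hl HL [x0 [Hx0 Hx0']].
  set (S := fun s => exists x, norm (vsub x a) <= rho /\ s = G x).
  destruct (inf_exists S) as [m [Hm1 Hm2]].
  assert (HLm : xle (Fin L) m) by (apply Hm2; intros s [x [Hx ->]]; apply HL; auto).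
  assert (Hm0 : xle m (G x0)) by (apply Hm1; exists x0; auto).
  destruct m as [|mu|]; [simpl in HLm; tauto| |destruct (G x0); simpl in Hm0; [tauto|tauto|congruence]].
  assert (Hseq : forall j, exists x, norm (vsub x a) <= rho /\ xle (G x) (Fin (mu + tk j))).
  { intro j. destruct (inf_approx S mu (tk j) (conj Hm1 Hm2) (tk_pos j)) as [s [[x [Hx ->]] Hs]].
    eauto. }
  destruct (choice _ Hseq) as [xj Hxj].
  destruct (bolzano_weierstrass n xj (norm a + rho)) as [phi [xs [Hphi Hcv]]].
  { intro k. destruct (Hxj k) as [H _]. pose proof (norm_sub_triangle _ (xj k) a vzero).
    rewrite !vsub_zero_r in *. lra. }
  assert (Hxs : norm (vsub xs a) <= rho) by (apply (closed_ball_limit _ _ _ _ _ Hcv); intro; apply Hxj).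
  exists xs. split; auto.
  assert (HG : xle (G xs) (Fin mu)).
  { apply xle_approx_above. intros eta Heta. apply NNPP. intro Hgt.
    assert (Hlt : xlt (Fin (mu + eta)) (G xs)).
    { apply xlt_Fin_iff. destruct (G xs); simpl in Hgt; auto; lra. }
    destruct (Hl xs _ Hlt) as [d [Hd Hnb]].
    destruct (Hcv d Hd) as [N1 HN1]. destruct (tk_cv eta Heta) as [N2 HN2].
    set (k := max N1 N2). specialize (Hnb _ (HN1 k ltac:(lia))). apply xlt_Fin_iff in Hnb.
    destruct (Hxj (phi k)) as [_ Hle]. specialize (HN2 (phi k)).
    assert (phi k >= N2)%nat by (pose proof (subseq_ge _ Hphi k); lia).
    specialize (HN2 H). unfold R_dist in HN2. rewrite Rminus_0_r, Rabs_right in HN2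
      by (apply Rle_ge, Rlt_le, tk_pos).
    destruct (G (xj (phi k))); simpl in *; try tauto; lra. }
  intros x Hx. apply xle_trans with (Fin mu); auto. apply Hm1. exists x. auto.
Qed.

(** ** Subgradients, graphical derivatives and subregularity *)

(** A quadratic minorant touching [f] at [x] with slope [v] makes [v] a
    (regular, hence limiting) subgradient of [f] at [x]. *)
Lemma subdiff_of_quadratic_minorant n (f : vec n -> xreal) x fx v C d :
  f x = Fin fx -> d > 0 -> C >= 0 ->
  (forall y, norm (vsub y x) < d ->
     xle (Fin (fx + dot v (vsub y x) - C * norm (vsub y x) ^ 2)) (f y)) ->
  subdiff f x v.
Proof.
  intros Hx Hd HC Hy. exists fx. split; auto.
  assert (Hu : epi f (pairv x (rv fx))) by (exists x, fx; rewrite Hx; simpl; split; [reflexivity|lra]).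
  split; auto.
  exists (fun _ => pairv x (rv fx)), (fun _ => pairv v (rv (-1))).
  split; [auto|split; [apply vconv_const|split; [apply vconv_const|]]].
  intros _. split; auto. intros e He.
  set (d' := Rmin d (e / (C + 1))).
  assert (Hd' : d' > 0) by (apply Rmin_pos; auto; apply Rdiv_lt_0_compat; lra).
  exists d'. split; auto.
  intros u' [y [t [-> Ht]]] Hn.
  rewrite pairv_sub, dot_pairv, vsub_rv, dot_rv. rewrite pairv_sub, vsub_rv in Hn.
  destruct (norm_pairv_bounds _ _ (vsub y x) (rv (t - fx))) as [Hcomp _].
  pose proof (Rmin_l d (e / (C + 1))). pose proof (Rmin_r d (e / (C + 1))).
  specialize (Hy y ltac:(unfold d' in *; lra)).
  assert (Hval : fx + dot v (vsub y x) - C * norm (vsub y x) ^ 2 <= t).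
  { destruct (f y); simpl in *; try tauto; lra. }
  set (a := norm (vsub y x)) in *. set (b := norm (pairv (vsub y x) (rv (t - fx)))) in *.
  pose proof (norm_nonneg _ (vsub y x)) as Ha. fold a in Ha.
  assert (Hquad : C * a ^ 2 <= e * b).
  { assert (Ha' : a <= e / (C+1)) by (unfold d' in *; lra).
    assert (C * a <= e) by
      (apply Rle_trans with ((C+1) * (e/(C+1))); [nra|right; field; lra]).
    nra. }
  lra.
Qed.

Lemma gder_iff n (f : vec n -> xreal) xb w z :
  gder f xb vzero w z <-> exists (t : nat -> R) (wk zk : nat -> vec n),
    down_to_0 t /\ vconv wk w /\ vconv zk z /\
    forall k, subdiff f (vadd xb (vscal (t k) (wk k))) (vscal (t k) (zk k)).
Proof.
  split.
  - intros [t [vk [Ht [Hv Hm]]]]. exists t, (fun k => fstv (vk k)), (fun k => sndv (vk k)).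
    assert (Hcomp : forall k, norm (vsub (fstv (vk k)) w) <= norm (vsub (vk k) (pairv w z)) /\
                              norm (vsub (sndv (vk k)) z) <= norm (vsub (vk k) (pairv w z))).
    { intro k. rewrite <- (pairv_eta _ _ (vk k)), pairv_sub, fst_pairv, snd_pairv.
      destruct (norm_pairv_bounds _ _ (vsub (fstv (vk k)) w) (vsub (sndv (vk k)) z)) as [H1 [H2 _]].
      auto. }
    split; auto. split; [|split].
    + intros e He. destruct (Hv e He) as [N HN]. exists N. intros k Hk.
      eapply Rle_lt_trans; [apply Hcomp|apply HN; auto].
    + intros e He. destruct (Hv e He) as [N HN]. exists N. intros k Hk.
      eapply Rle_lt_trans; [apply Hcomp|apply HN; auto].
    + intro k. destruct (Hm k) as [x [v [E Hs]]].
      rewrite <- (pairv_eta _ _ (vk k)), pairv_scal, pairv_add in E.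
      assert (Ex := f_equal fstv E). assert (Ev := f_equal sndv E).
      rewrite !fst_pairv in Ex. rewrite !snd_pairv in Ev. subst x v.
      replace (vadd vzero (vscal (t k) (sndv (vk k)))) with (vscal (t k) (sndv (vk k))) in Hs by vext.
      exact Hs.
  - intros [t [wk [zk [Ht [Hw [Hz Hs]]]]]]. exists t, (fun k => pairv (wk k) (zk k)).
    split; auto. split.
    + intros e He. destruct (Hw (e/2)) as [N1 H1]; [lra|]. destruct (Hz (e/2)) as [N2 H2]; [lra|].
      exists (max N1 N2). intros k Hk. rewrite pairv_sub.
      eapply Rle_lt_trans; [apply norm_pairv_bounds|].
      specialize (H1 k ltac:(lia)). specialize (H2 k ltac:(lia)). lra.
    + intro k. exists (vadd xb (vscal (t k) (wk k))), (vscal (t k) (zk k)). split; auto.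
      rewrite pairv_scal, pairv_add. f_equal. vext.
Qed.

Lemma gder_of_eventually n (f : vec n -> xreal) xb w z (t : nat -> R) (wk zk : nat -> vec n) K :
  down_to_0 t -> vconv wk w -> vconv zk z ->
  (forall k, (k >= K)%nat -> subdiff f (vadd xb (vscal (t k) (wk k))) (vscal (t k) (zk k))) ->
  gder f xb vzero w z.
Proof.
  intros [Ht1 Ht2] Hw Hz Hs. apply gder_iff.
  exists (fun k => t (K + k)%nat), (fun k => wk (K + k)%nat), (fun k => zk (K + k)%nat).
  split; [split; auto; apply Un_cv_shift; auto|].
  split; [apply vconv_shift; auto|]. split; [apply vconv_shift; auto|].
  intro k. apply Hs. lia.
Qed.

Definition subdiff_estimate {n} (f : vec n -> xreal) (xb : vec n) : Prop :=
  exists kk d, kk > 0 /\ d > 0 /\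
    forall x, norm (vsub x xb) < d -> forall v, subdiff f x v -> norm (vsub x xb) <= kk * norm v.

Lemma subdiff_estimate_kernel n (f : vec n -> xreal) xb :
  subdiff_estimate f xb -> forall w, gder f xb vzero w vzero -> w = vzero.
Proof.
  intros [kk [dd [Hkk [Hdd Hest]]]] w Hg. apply gder_iff in Hg.
  destruct Hg as [t [wk [zk [[Ht1 Ht2] [Hwk [Hzk Hs]]]]]].
  apply norm_eq0. apply Rle_antisym; [|apply norm_nonneg].
  (* [|w_k| <= kk |z_k|] eventually, and [z_k -> 0] *)
  destruct (vconv_along_direction _ xb t wk w Ht2 Hwk dd Hdd) as [N HN].
  assert (Hle : forall k, (k >= N)%nat -> norm (wk k) <= kk * norm (zk k)).
  { intros k Hk. specialize (Hest _ (HN k Hk) _ (Hs k)). specialize (Ht1 k).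
    rewrite vsub_add_scal, !norm_scal, Rabs_right in Hest by lra.
    apply (Rmult_le_reg_l (t k)); auto. lra. }
  apply Rnot_lt_le. intro Hpos.
  destruct (vconv_norm _ _ _ Hwk (norm w / 2)) as [N1 HN1]; [lra|].
  destruct (Hzk (norm w / (4 * kk))) as [N2 HN2]; [apply Rdiv_lt_0_compat; lra|].
  set (k := max N (max N1 N2)). specialize (Hle k ltac:(lia)).
  specialize (HN1 k ltac:(lia)). specialize (HN2 k ltac:(lia)).
  unfold R_dist in HN1. apply Rabs_def2 in HN1. rewrite vsub_zero_r in HN2.
  assert (kk * norm (zk k) < norm w / 4).
  { apply Rlt_le_trans with (kk * (norm w / (4 * kk))); [apply Rmult_lt_compat_l; auto|].
    right. field. lra. }
  lra.
Qed.

Lemma subdiff_estimate_of_kernel n (f : vec n -> xreal) xb :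
  (forall w, gder f xb vzero w vzero -> w = vzero) -> subdiff_estimate f xb.
Proof.
  intro Hker. apply NNPP. intro Hn.
  (* failure of the estimate with constant [k+1] within distance [tk k] *)
  assert (Hseq : forall k, exists xv, norm (vsub (fst xv) xb) < tk k /\ subdiff f (fst xv) (snd xv) /\
                   norm (vsub (fst xv) xb) > INR (S k) * norm (snd xv)).
  { intro k. apply NNPP. intro Hn2. apply Hn. exists (INR (S k)), (tk k).
    split; [apply lt_0_INR; lia|]. split; [apply tk_pos|].
    intros x Hx v Hv. apply Rnot_lt_le. intro Hlt. apply Hn2. exists (x, v). auto. }
  destruct (choice _ Hseq) as [xv Hxv].
  set (d := fun k => norm (vsub (fst (xv k)) xb)).
  assert (Hd : forall k, d k > 0).
  { intro k. destruct (Hxv k) as [_ [_ H3]]. pose proof (norm_nonneg _ (snd (xv k))).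
    pose proof (pos_INR (S k)). unfold d. nra. }
  destruct (directions_cluster n xb (fun k => fst (xv k)) Hd) as [phi [w [Hphi [Hw Hcv]]]].
  set (z := fun k => vscal (/ d k) (snd (xv k))).
  assert (Hz : forall k, norm (z k) < tk k).
  { intro k. unfold z. rewrite norm_scal, Rabs_right by (apply Rle_ge, Rlt_le, Rinv_0_lt_compat, Hd).
    destruct (Hxv k) as [_ [_ H3]]. change (d k > INR (S k) * norm (snd (xv k))) in H3. specialize (Hd k).
    assert (HI : INR (S k) > 0) by (apply lt_0_INR; lia). unfold tk.
    apply (Rmult_lt_reg_l (d k * INR (S k))); [nra|].
    replace (d k * INR (S k) * (/ d k * norm (snd (xv k)))) with (INR (S k) * norm (snd (xv k)))
      by (field; lra).
    replace (d k * INR (S k) * / INR (S k)) with (d k) by (field; lra). lra. }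
  apply (unit_neq0 _ w Hw), Hker, gder_iff.
  exists (fun j => d (phi j)), (fun j => vscal (/ d (phi j)) (vsub (fst (xv (phi j))) xb)), (fun j => z (phi j)).
  split; [split|split; [exact Hcv|split]].
  - intro; apply Hd.
  - apply Un_cv_subseq; auto. apply (Un_cv_dominated _ tk); [|apply tk_cv].
    intro k. split; [apply Hd|apply Hxv].
  - apply vconv_iff. apply (Un_cv_squeeze0 _ (fun j => tk (phi j))).
    + intro j. rewrite vsub_zero_r. split; [apply norm_nonneg|apply Rlt_le, Hz].
    + apply Un_cv_subseq; [apply tk_cv|auto].
  - intro j. pose proof (Hd (phi j)). rewrite recompose_direction by lra.
    replace (vscal (d (phi j)) (z (phi j))) with (snd (xv (phi j)))
      by (apply functional_extensionality; intro i; unfold z, vscal; field; lra).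
    apply Hxv.
Qed.

Lemma strong_metric_subreg_of_estimate n (F : vec n -> vec n -> Prop) xb yb kk d :
  F xb yb -> kk > 0 -> d > 0 ->
  (forall x, norm (vsub x xb) < d -> forall v, F x v -> norm (vsub x xb) <= kk * norm (vsub yb v)) ->
  strong_metric_subreg F xb yb.
Proof.
  intros H0 Hkk Hd Hest. split; [|split; [exact H0|]].
  - exists kk, d. split; auto. split; auto. intros x Hx d1 d2 Hd1 Hd2.
    assert (E1 : xle d1 (Fin (norm (vsub x xb)))) by (apply (proj1 Hd1); exists xb; auto).
    assert (E2 : xle (Fin (norm (vsub x xb) / kk)) d2).
    { apply (proj2 Hd2). intros s [v [Hv ->]]. simpl.
      specialize (Hest x Hx v Hv). apply (Rmult_le_reg_r kk); auto.
      unfold Rdiv. rewrite Rmult_assoc, Rinv_l by lra. lra. }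
    destruct d2 as [|r2|]; simpl in E2 |- *; try tauto; [|apply xle_PInf].
    eapply xle_trans; [exact E1|]. simpl.
    replace (norm (vsub x xb)) with (norm (vsub x xb) / kk * kk) by (field; lra).
    rewrite Rmult_comm. apply Rmult_le_compat_l; lra.
  - exists d. split; auto. intros x Hx Hv. specialize (Hest x Hx yb Hv).
    rewrite vsub_self, norm_zero in Hest. apply vsub_eq0, norm_eq0.
    pose proof (norm_nonneg _ (vsub x xb)). lra.
Qed.

Lemma estimate_of_strong_metric_subreg n (F : vec n -> vec n -> Prop) xb yb :
  strong_metric_subreg F xb yb -> exists kk d, kk > 0 /\ d > 0 /\
    forall x, norm (vsub x xb) < d -> forall v, F x v -> norm (vsub x xb) <= kk * norm (vsub yb v).
Proof.
  intros [[kk [dd [Hkk [Hdd HS]]]] [_ [d' [Hd' Hiso]]]].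
  exists kk, (Rmin dd (d'/2)). split; auto. split; [apply Rmin_pos; lra|].
  intros x Hx v Hv. pose proof (Rmin_l dd (d'/2)). pose proof (Rmin_r dd (d'/2)).
  destruct (inf_exists (fun s => exists a, F a yb /\ s = Fin (norm (vsub x a)))) as [d1 Hd1].
  destruct (inf_exists (fun s => exists a, F x a /\ s = Fin (norm (vsub yb a)))) as [d2 Hd2].
  specialize (HS x ltac:(lra) d1 d2 Hd1 Hd2).
  (* [xb] is the nearest point of [F^-1 yb] to [x], by isolation *)
  assert (E1 : xle (Fin (norm (vsub x xb))) d1).
  { apply (proj2 Hd1). intros s [a [Ha ->]]. simpl.
    destruct (Rlt_le_dec (norm (vsub a xb)) d') as [Hlt|Hge].
    - rewrite (Hiso a Hlt Ha). lra.
    - pose proof (norm_sub_triangle _ a x xb). rewrite (norm_sub_sym _ a x) in *. lra. }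
  assert (E2 : xle d2 (Fin (norm (vsub yb v)))) by (apply (proj1 Hd2); exists v; auto).
  assert (E3 : xle (xscal kk d2) (Fin (kk * norm (vsub yb v)))).
  { destruct d2; simpl in E2 |- *; try tauto. apply Rmult_le_compat_l; lra. }
  exact (xle_trans _ _ _ (xle_trans _ _ _ E1 HS) E3).
Qed.

(** ** The second subderivative under the standing assumptions *)

Lemma Rle_div_of_mul g A B : B > 0 -> g * B <= A -> g <= A / B.
Proof.
  intros HB H. apply (Rmult_le_reg_r B); auto. unfold Rdiv.
  rewrite Rmult_assoc, Rinv_l by lra. lra.
Qed.
Lemma Rdiv_le_of_mul g A B : B > 0 -> A <= g * B -> A / B <= g.
Proof.
  intros HB H. apply (Rmult_le_reg_r B); auto. unfold Rdiv.
  rewrite Rmult_assoc, Rinv_l by lra. lra.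
Qed.

(** If [a <= s^2 a + 2(1-s) D + r (1-s)^2 N] for all [s] in [(0,1)], then
    [a <= D]: divide by [1 - s] and let [s -> 1]. *)
Lemma le_of_scaled_bounds a D N r : r >= 0 -> N >= 0 ->
  (forall s, 0 < s < 1 -> a <= s^2 * a + 2 * (1 - s) * D + r * (1 - s)^2 * N) -> a <= D.
Proof.
  intros Hr HN H. apply Rnot_lt_le. intro Hlt.
  destruct (Rle_dec (a + r * N) 0).
  - specialize (H (1/2) ltac:(lra)). nra.
  - set (e := Rmin (1/2) ((a - D) / (a + r * N))).
    assert (0 < e) by (apply Rmin_pos; [lra|apply Rdiv_lt_0_compat; lra]).
    assert (e <= 1/2) by apply Rmin_l.
    assert (e * (a + r * N) <= a - D).
    { apply Rle_trans with ((a - D) / (a + r * N) * (a + r * N)).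
      - apply Rmult_le_compat_r; [lra|apply Rmin_r].
      - right. field. lra. }
    specialize (H (1 - e) ltac:(lra)).
    assert (e * (2 * (a - D)) <= e * (e * (a + r * N))) by nra.
    nra.
Qed.

Section SecondSubderivative.

Variable n : nat.
Variable f : vec n -> xreal.
Variable xb : vec n.
Variable fxb : R.
Hypothesis f_xb : f xb = Fin fxb.
Hypothesis f_notMInf : forall x, f x <> MInf.
Hypothesis f_lsc : lsc f.
Hypothesis zero_subgrad : subdiff f xb vzero.
Variables r eps : R.
Hypothesis r_pos : r > 0.
Hypothesis eps_pos : eps > 0.
Hypothesis prox : forall x u v fu, norm (vsub x xb) <= eps -> norm (vsub u xb) <= eps ->
  f u = Fin fu -> Rabs (fu - fxb) < eps -> subdiff f u v -> norm (vsub v vzero) <= eps ->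
  xle (Fin (fu + dot v (vsub x u) - r / 2 * (norm (vsub x u)) ^ 2)) (f x).
Hypothesis subdiff_cont : forall xk vk, vconv xk xb -> vconv vk vzero ->
  (forall k, subdiff f (xk k) (vk k)) -> xconv (fun k => f (xk k)) (Fin fxb).
Hypothesis epi_diff : forall (w : vec n) tau, down_to_0 tau -> exists wk, vconv wk w /\
  forall a, second_subderiv f xb vzero w a -> xconv (fun k => quot2 f xb vzero fxb (tau k) (wk k)) a.

Definition Q tau w := quot2 f xb vzero fxb tau w.

Lemma Q_ge tau w g : tau > 0 ->
  xle (Fin (fxb + tau^2/2 * g)) (f (vadd xb (vscal tau w))) -> xle (Fin g) (Q tau w).
Proof.
  intros Ht H. unfold Q, quot2. rewrite dot_zero_l.
  destruct (f (vadd xb (vscal tau w))); simpl in *; auto. apply Rle_div_of_mul; nra.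
Qed.

Lemma Q_fin tau w y : tau > 0 ->
  f (vadd xb (vscal tau w)) = Fin y -> Q tau w = Fin ((y - fxb) / (tau^2/2)).
Proof. intros Ht H. unfold Q, quot2. rewrite H, dot_zero_l. f_equal. field. lra. Qed.

Lemma Q_inv tau w p : tau > 0 ->
  Q tau w = Fin p -> f (vadd xb (vscal tau w)) = Fin (fxb + tau^2/2 * p).
Proof.
  intros Ht. unfold Q, quot2. rewrite dot_zero_l.
  destruct (f (vadd xb (vscal tau w))); intro E; inversion E. f_equal. field. lra.
Qed.

Lemma Q_scale tau s w : tau > 0 -> s > 0 -> Q tau (vscal s w) = xscal (s^2) (Q (s * tau) w).
Proof.
  intros Ht Hs. unfold Q, quot2. rewrite !dot_zero_l.
  replace (vadd xb (vscal tau (vscal s w))) with (vadd xb (vscal (s * tau) w)) by vext.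
  destruct (f (vadd xb (vscal (s * tau) w))); simpl; auto. f_equal. field. lra.
Qed.

Definition near_quotients d w q := exists tau w', 0 < tau < d /\ norm (vsub w' w) < d /\ q = Q tau w'.
Definition local_infima w b := exists d, d > 0 /\ is_inf (near_quotients d w) b.

Definition h w := proj1_sig (constructive_indefinite_description _ (sup_exists (local_infima w))).

Lemma h_spec w : is_sup (local_infima w) (h w).
Proof. unfold h. destruct (constructive_indefinite_description _ _). auto. Qed.

Lemma h_second_subderiv w : second_subderiv f xb vzero w (h w).
Proof. exists fxb. split; auto. apply h_spec. Qed.

Lemma h_ge w (g : vec n -> R) :
  (exists d, d > 0 /\ forall tau w', 0 < tau < d -> norm (vsub w' w) < d -> xle (Fin (g w')) (Q tau w')) ->
  (forall eta, eta > 0 -> exists d, d > 0 /\ forall w', norm (vsub w' w) < d -> g w - eta <= g w') ->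
  xle (Fin (g w)) (h w).
Proof.
  intros [d1 [Hd1 H1]] Hc. apply xle_approx_below. intros eta Heta.
  destruct (Hc eta Heta) as [d2 [Hd2 H2]].
  set (d := Rmin d1 d2). assert (0 < d) by (apply Rmin_pos; auto).
  pose proof (Rmin_l d1 d2). pose proof (Rmin_r d1 d2).
  destruct (inf_exists (near_quotients d w)) as [b Hb].
  apply xle_trans with b.
  - apply Hb. intros q [tau [w' [Ht [Hw ->]]]].
    apply xle_trans with (Fin (g w')); [simpl; apply H2; unfold d in *; lra|].
    apply H1; unfold d in *; lra.
  - apply (proj1 (h_spec w)). exists d. auto.
Qed.

Lemma h_le_of_limsup w (tau : nat -> R) (wk : nat -> vec n) c :
  (forall k, tau k > 0) -> Un_cv tau 0 -> vconv wk w ->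
  (forall eta, eta > 0 -> exists N, forall k, (k >= N)%nat -> xle (Q (tau k) (wk k)) (Fin (c + eta))) ->
  xle (h w) (Fin c).
Proof.
  intros Hp Ht Hw Hq. apply (proj2 (h_spec w)). intros b [d [Hd Hb]].
  apply xle_approx_above. intros eta Heta.
  destruct (Hq eta Heta) as [N1 HN1]. destruct (Ht d Hd) as [N2 HN2]. destruct (Hw d Hd) as [N3 HN3].
  set (k := max N1 (max N2 N3)).
  apply xle_trans with (Q (tau k) (wk k)); [|apply HN1; lia].
  apply Hb. exists (tau k), (wk k). split; [|split; [apply HN3; lia|auto]].
  specialize (HN2 k ltac:(lia)). unfold R_dist in HN2. rewrite Rminus_0_r in HN2.
  specialize (Hp k). rewrite Rabs_right in HN2 by lra. lra.
Qed.

Lemma h_le_of_bounds w (tau : nat -> R) (wk : nat -> vec n) (b : nat -> R) c N :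
  (forall k, tau k > 0) -> Un_cv tau 0 -> vconv wk w -> Un_cv b c ->
  (forall k, (k >= N)%nat -> xle (Q (tau k) (wk k)) (Fin (b k))) ->
  xle (h w) (Fin c).
Proof.
  intros Hp Ht Hw Hb Hq. apply (h_le_of_limsup w tau wk); auto.
  intros eta Heta. destruct (Hb eta Heta) as [N1 HN1]. exists (max N N1). intros k Hk.
  eapply xle_trans; [apply Hq; lia|]. specialize (HN1 k ltac:(lia)).
  unfold R_dist in HN1. apply Rabs_def2 in HN1. simpl. lra.
Qed.

(** Lower semicontinuity of [h], in the form used below. *)
Lemma h_lsc w c : (forall d, d > 0 -> exists w', norm (vsub w' w) < d /\ xle (h w') (Fin (c + d))) ->
  xle (h w) (Fin c).
Proof.
  intros Hc. apply (proj2 (h_spec w)). intros b [d [Hd Hb]].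
  apply xle_approx_above. intros eta Heta.
  set (d' := Rmin (d/2) eta). assert (Hd' : 0 < d') by (apply Rmin_pos; lra).
  destruct (Hc d' Hd') as [w' [Hw' Hle]].
  pose proof (Rmin_l (d/2) eta). pose proof (Rmin_r (d/2) eta).
  destruct (inf_exists (near_quotients (d/2) w')) as [b' Hb'].
  apply xle_trans with b'.
  - apply Hb'. intros q [tau [w'' [Ht [Hw ->]]]]. apply Hb. exists tau, w''.
    split; [lra|split; auto]. pose proof (norm_sub_triangle _ w'' w' w). unfold d' in *. lra.
  - apply xle_trans with (h w'); [apply (proj1 (h_spec w')); exists (d/2); split; auto; lra|].
    apply xle_trans with (Fin (c + d')); auto. simpl. unfold d' in *. lra.
Qed.

Lemma h_attained w tau : down_to_0 tau ->
  exists wk, vconv wk w /\ xconv (fun k => Q (tau k) (wk k)) (h w).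
Proof.
  intros Ht. destruct (epi_diff w tau Ht) as [wk [Hw Hc]]. exists wk. split; auto.
  apply Hc, h_second_subderiv.
Qed.

(** Prox-regularity at [(xb, 0)] bounds [h] below by [-r |w|^2]. *)
Lemma h_ge_neg w : xle (Fin (- r * norm w ^ 2)) (h w).
Proof.
  apply (h_ge w (fun w' => - r * norm w' ^ 2)).
  - pose proof (norm_nonneg _ w).
    set (d := Rmin 1 (eps / (norm w + 1))).
    pose proof (Rmin_l 1 (eps / (norm w + 1))). pose proof (Rmin_r 1 (eps / (norm w + 1))).
    exists d. split; [apply Rmin_pos; [lra|apply Rdiv_lt_0_compat; lra]|].
    intros tau w' Ht Hw'. pose proof (norm_le_of_near _ w' w d Hw').
    assert (Hsmall : tau * norm w' <= eps).
    { apply Rle_trans with (eps / (norm w + 1) * (norm w + 1)); [|right; field; lra].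
      pose proof (norm_nonneg _ w'). apply Rmult_le_compat; unfold d in *; lra. }
    apply Q_ge; [lra|].
    assert (HH := prox (vadd xb (vscal tau w')) xb vzero fxb).
    rewrite vsub_add_scal, norm_scal, Rabs_right, vsub_self, norm_zero, dot_zero_l,
      Rminus_diag, Rabs_R0, vsub_self, norm_zero in HH by lra.
    eapply xle_trans; [|apply HH; auto; lra]. simpl. apply Req_le. field.
  - intros eta He. destruct (sq_norm_continuous _ w (- r) eta He) as [d [Hd Hc]].
    exists d. split; auto. intros w' Hw'. specialize (Hc w' Hw'). apply Rabs_def2 in Hc. lra.
Qed.

Lemma h_notMInf w : h w <> MInf.
Proof. intro E. pose proof (h_ge_neg w) as H. rewrite E in H. simpl in H. auto. Qed.

(** [h] is positively homogeneous of degree 2 (the inequality suffices). *)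
Lemma h_homogeneous w s a : s > 0 -> h w = Fin a -> xle (h (vscal s w)) (Fin (s^2 * a)).
Proof.
  intros Hs Ea.
  destruct (h_attained w (fun k => s * tk k)) as [wk [Hw Hc]]; [apply down_scal; auto; apply down_tk|].
  apply (h_le_of_limsup _ tk (fun k => vscal s (wk k))); [apply tk_pos|apply tk_cv|apply vconv_scal_const; auto|].
  intros eta Heta. rewrite Ea in Hc. simpl in Hc.
  destruct (Hc (eta / s^2)) as [N HN]; [apply Rdiv_lt_0_compat; nra|].
  exists N. intros k Hk. destruct (HN k Hk) as [q [Eq Hq]].
  rewrite Q_scale, Eq by (auto; apply tk_pos). simpl.
  apply Rabs_def2 in Hq. destruct Hq as [Hq1 Hq2].
  assert (s^2 * (q - a) <= s^2 * (eta / s^2)) by (apply Rmult_le_compat_l; nra).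
  replace (s^2 * (eta / s^2)) with eta in * by (field; nra). nra.
Qed.

(** Prox-regularity at the points [xb + t_k w_k] carrying the subgradients
    [t_k z_k]: a quotient of [f] at any nearby point [xb + t_k u] bounds the
    quotient at [w_k]. *)
Lemma prox_quotient_bound (t : nat -> R) (wk zk : nat -> vec n) w z :
  down_to_0 t -> vconv wk w -> vconv zk z ->
  (forall k, subdiff f (vadd xb (vscal (t k) (wk k))) (vscal (t k) (zk k))) ->
  exists N, forall k, (k >= N)%nat -> forall u p, norm (vscal (t k) u) <= eps ->
    f (vadd xb (vscal (t k) u)) = Fin (fxb + t k ^ 2 / 2 * p) ->
    xle (Q (t k) (wk k)) (Fin (p - 2 * dot (zk k) (vsub u (wk k)) + r * norm (vsub u (wk k)) ^ 2)).
Proof.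
  intros [Ht1 Ht2] Hw Hz Hs.
  pose proof (vconv_along_direction _ xb t wk w Ht2 Hw) as Hx.
  pose proof (vconv_shrink _ t zk z Ht2 Hz) as Hv.
  destruct (subdiff_cont _ _ Hx Hv Hs eps eps_pos) as [N1 HN1].
  destruct (Hx eps eps_pos) as [N2 HN2]. destruct (Hv eps eps_pos) as [N3 HN3].
  exists (max N1 (max N2 N3)). intros k Hk u p Hu Hfu.
  destruct (HN1 k ltac:(lia)) as [y [Ey Hy]]. specialize (Ht1 k).
  assert (HP := prox (vadd xb (vscal (t k) u)) _ _ y
    ltac:(rewrite vsub_add_scal; lra) (Rlt_le _ _ (HN2 k ltac:(lia))) Ey Hy (Hs k)
    (Rlt_le _ _ (HN3 k ltac:(lia)))).
  rewrite Hfu in HP. simpl in HP.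
  replace (vsub (vadd xb (vscal (t k) u)) (vadd xb (vscal (t k) (wk k))))
    with (vscal (t k) (vsub u (wk k))) in HP by vext.
  rewrite dot_scal_l, dot_scal_r, norm_scal, Rabs_right in HP by lra.
  rewrite (Q_fin _ _ y Ht1 Ey). simpl. apply Rdiv_le_of_mul; nra.
Qed.

Lemma h_finite_of_gder w z : gder f xb vzero w z -> exists a, h w = Fin a.
Proof.
  intro Hg. apply gder_iff in Hg. destruct Hg as [t [wk [zk [Hdt [Hw [Hz Hs]]]]]].
  destruct (prox_quotient_bound t wk zk w z Hdt Hw Hz Hs) as [N HN].
  set (b := fun k => 0 - 2 * dot (zk k) (vsub vzero (wk k)) + r * norm (vsub vzero (wk k)) ^ 2).
  assert (Hb : Un_cv b (0 - 2 * dot z (vsub vzero w) + r * norm (vsub vzero w) ^ 2)).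
  { pose proof (vconv_sub _ _ _ _ _ (vconv_const _ vzero) Hw) as Hd.
    apply CV_plus; [apply CV_minus; [apply Un_cv_const|]|]; apply CV_mult; try apply Un_cv_const.
    - apply dot_cv; auto.
    - apply norm_sq_cv; auto. }
  assert (Hle := h_le_of_bounds w t wk b _ N (proj1 Hdt) (proj2 Hdt) Hw Hb).
  destruct (h w) as [|a|] eqn:E; [exfalso; apply (h_notMInf w); auto|eauto|].
  exfalso. refine (Hle _). intros k Hk. apply HN; auto.
  - replace (vscal (t k) vzero) with (@vzero n) by vext. rewrite norm_zero. lra.
  - replace (vadd xb (vscal (t k) vzero)) with xb by vext. rewrite f_xb. f_equal. ring.
Qed.

(** Comparing the quotients at [w_k] with those at [s w'_k], where [w'_k]
    realizes [h w] along [s t_k] (twice epi-differentiability). *)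
Lemma h_scaled_bound w z a s : gder f xb vzero w z -> h w = Fin a -> 0 < s < 1 ->
  a <= s^2 * a + 2 * (1 - s) * dot z w + r * (1 - s)^2 * norm w ^ 2.
Proof.
  intros Hg Ea Hs01. apply gder_iff in Hg. destruct Hg as [t [wk [zk [Hdt [Hw [Hz Hs]]]]]].
  destruct (prox_quotient_bound t wk zk w z Hdt Hw Hz Hs) as [N HN].
  assert (Hdst : down_to_0 (fun k => s * t k)) by (apply down_scal; [lra|auto]).
  destruct (h_attained w _ Hdst) as [w2 [Hw2 Hq2]]. rewrite Ea in Hq2.
  set (B := fun k => - 2 * dot (zk k) (vsub (vscal s (w2 k)) (wk k))
                     + r * norm (vsub (vscal s (w2 k)) (wk k)) ^ 2).
  assert (Hdiff : vconv (fun k => vsub (vscal s (w2 k)) (wk k)) (vscal (s - 1) w)).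
  { replace (vscal (s - 1) w) with (vsub (vscal s w) w) by vext.
    apply vconv_sub; auto. apply vconv_scal_const; auto. }
  assert (HB : Un_cv B (- 2 * dot z (vscal (s - 1) w) + r * norm (vscal (s - 1) w) ^ 2)).
  { apply CV_plus; apply CV_mult; try apply Un_cv_const; [apply dot_cv|apply norm_sq_cv]; auto. }
  assert (Hsmall := vconv_shrink _ _ _ w (proj2 Hdst) Hw2).
  assert (Hle : xle (h w) (Fin (s^2 * a + (- 2 * dot z (vscal (s - 1) w) + r * norm (vscal (s - 1) w) ^ 2)))).
  { apply (h_le_of_limsup w t wk); [apply Hdt|apply Hdt|auto|].
    intros eta He.
    destruct (Hq2 (eta/2)) as [N1 HN1]; [lra|]. destruct (HB (eta/2)) as [N2 HN2]; [lra|].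
    destruct (Hsmall eps eps_pos) as [N3 HN3].
    exists (max N (max N1 (max N2 N3))). intros k Hk.
    destruct (HN1 k ltac:(lia)) as [p [Ep Hp]]. specialize (HN2 k ltac:(lia)).
    specialize (HN3 k ltac:(lia)). rewrite vsub_zero_r in HN3.
    pose proof (proj1 Hdt k) as Htk.
    assert (Hf : f (vadd xb (vscal (t k) (vscal s (w2 k)))) = Fin (fxb + t k ^ 2 / 2 * (s^2 * p))).
    { replace (vadd xb (vscal (t k) (vscal s (w2 k)))) with (vadd xb (vscal (s * t k) (w2 k))) by vext.
      rewrite (Q_inv (s * t k) (w2 k) p ltac:(nra) Ep). f_equal. field. }
    eapply xle_trans; [apply (HN k ltac:(lia) _ _ ltac:(replace (vscal (t k) (vscal s (w2 k))) with (vscal (s * t k) (w2 k)) by vext; lra) Hf)|].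
    simpl. unfold R_dist in HN2. apply Rabs_def2 in HN2. apply Rabs_def2 in Hp. fold (B k).
    assert (s^2 * p <= s^2 * a + eta/2).
    { assert (0 <= s^2 <= 1) by (split; nra).
      assert (s^2 * (p - a) <= s^2 * (eta/2)) by (apply Rmult_le_compat_l; lra). nra. }
    unfold B in *. lra. }
  rewrite Ea in Hle. simpl in Hle. rewrite dot_scal_r, norm_scal, Rabs_left in Hle by lra.
  replace (2 * (1 - s) * dot z w + r * (1 - s)^2 * norm w ^ 2)
    with (- 2 * ((s - 1) * dot z w) + r * (- (s - 1) * norm w) ^ 2) by ring.
  lra.
Qed.

Lemma h_le_dot w z : gder f xb vzero w z -> exists a, h w = Fin a /\ a <= dot z w.
Proof.
  intro Hg. destruct (h_finite_of_gder w z Hg) as [a Ea]. exists a. split; auto.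
  apply (le_of_scaled_bounds a (dot z w) (norm w ^ 2) r); [lra|apply Rle_ge, pow2_ge_0|].
  intros s Hs. apply (h_scaled_bound w z a s); auto.
Qed.

(** Quadratic growth of [f] at [xb] with modulus [kap] (possibly [kap <= 0]). *)
Definition growth kap := exists d, d > 0 /\
  forall x, norm (vsub x xb) < d -> xle (Fin (fxb + kap / 2 * norm (vsub x xb) ^ 2)) (f x).

Lemma strong_min_mod_growth kap : strong_min_mod f xb kap <-> growth kap.
Proof.
  split; [intros [fx [E H]]; rewrite f_xb in E; injection E as <-; exact H|].
  intro H. exists fxb. auto.
Qed.

Lemma h_ge_of_growth kap : growth kap -> forall w, xle (Fin (kap * norm w ^ 2)) (h w).
Proof.
  intros [d [Hd Hm]] w.
  apply (h_ge w (fun w' => kap * norm w' ^ 2)).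
  - pose proof (norm_nonneg _ w).
    set (d' := Rmin 1 (d / (norm w + 2))).
    pose proof (Rmin_l 1 (d / (norm w + 2))). pose proof (Rmin_r 1 (d / (norm w + 2))).
    exists d'. split; [apply Rmin_pos; [lra|apply Rdiv_lt_0_compat; lra]|].
    intros tau w' Ht Hw'. apply norm_le_of_near in Hw'.
    assert (Hsmall : tau * norm w' < d).
    { apply Rle_lt_trans with (d / (norm w + 2) * (norm w + 1)).
      - pose proof (norm_nonneg _ w'). apply Rmult_le_compat; unfold d' in *; lra.
      - apply Rlt_le_trans with (d / (norm w + 2) * (norm w + 2)); [|right; field; lra].
        apply Rmult_lt_compat_l; [apply Rdiv_lt_0_compat|]; lra. }
    apply Q_ge; [lra|]. specialize (Hm (vadd xb (vscal tau w'))).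
    rewrite vsub_add_scal, norm_scal, Rabs_right in Hm by lra.
    eapply xle_trans; [|apply Hm; lra]. simpl. apply Req_le. field.
  - intros eta He. destruct (sq_norm_continuous _ w kap eta He) as [d' [Hd' Hc]].
    exists d'. split; auto. intros w' Hw'. specialize (Hc w' Hw'). apply Rabs_def2 in Hc. lra.
Qed.

Lemma gder_dot_ge_of_growth kap : growth kap ->
  forall w z, gder f xb vzero w z -> dot z w >= kap * norm w ^ 2.
Proof.
  intros Hk w z Hg. destruct (h_le_dot w z Hg) as [a [Ea Ha]].
  pose proof (h_ge_of_growth kap Hk w) as HH. rewrite Ea in HH. simpl in HH. lra.
Qed.

Lemma no_growth_points kap : ~ growth kap ->
  forall k, exists x, norm (vsub x xb) < tk k /\ ~ xle (Fin (fxb + kap / 2 * norm (vsub x xb) ^ 2)) (f x).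
Proof.
  intros Hn k. apply NNPP. intro Hn2. apply Hn. exists (tk k). split; [apply tk_pos|].
  intros x Hx. apply NNPP. intro Hn3. apply Hn2. eauto.
Qed.

(** If growth fails with moduli [kap_k -> ka] at points converging to [xb],
    then [h <= ka] at some unit vector (a limit of the normalized directions). *)
Lemma h_small_of_no_growth (kap : nat -> R) ka : Un_cv kap ka ->
  (forall k, exists x, norm (vsub x xb) < tk k /\
     ~ xle (Fin (fxb + kap k / 2 * norm (vsub x xb) ^ 2)) (f x)) ->
  exists w, norm w = 1 /\ xle (h w) (Fin ka).
Proof.
  intros Hk Hx. destruct (choice _ Hx) as [xs Hxs].
  assert (Hy : forall k, exists y, f (xs k) = Fin y /\ y < fxb + kap k / 2 * norm (vsub (xs k) xb) ^ 2).
  { intro k. apply not_xle_Fin; [apply Hxs|apply f_notMInf]. }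
  destruct (choice _ Hy) as [y Hy'].
  set (d := fun k => norm (vsub (xs k) xb)).
  assert (Hd : forall k, d k > 0).
  { intro k. destruct (norm_nonneg _ (vsub (xs k) xb)) as [|E]; auto. exfalso.
    apply eq_sym, norm_eq0, vsub_eq0 in E. destruct (Hy' k) as [E1 E2].
    rewrite E, f_xb in E1. injection E1 as E1'. rewrite E, <- E1', vsub_self, norm_zero in E2. lra. }
  destruct (directions_cluster n xb xs Hd) as [phi [w [Hphi [Hw Hcv]]]].
  exists w. split; auto.
  apply (h_le_of_bounds w (fun j => d (phi j)) (fun j => vscal (/ d (phi j)) (vsub (xs (phi j)) xb))
           (fun j => kap (phi j)) ka O).
  - intro; apply Hd.
  - apply Un_cv_subseq; auto. apply (Un_cv_dominated _ tk); [|apply tk_cv].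
    intro k. split; [apply Hd|apply Hxs].
  - exact Hcv.
  - apply Un_cv_subseq; auto.
  - intros j _. set (k := phi j). destruct (Hy' k) as [E1 E2]. pose proof (Hd k).
    change (norm (vsub (xs k) xb)) with (d k) in E2.
    rewrite (Q_fin _ _ (y k) (Hd k)) by (rewrite recompose_direction by lra; auto). simpl.
    apply Rdiv_le_of_mul; nra.
Qed.

(** Lower bounds for [h] on the unit sphere extend to all directions by homogeneity. *)
Lemma h_ge_of_sphere m : (forall w, norm w = 1 -> xle (Fin m) (h w)) ->
  forall w, xle (Fin (m * norm w ^ 2)) (h w).
Proof.
  intros Hm w. destruct (Req_dec (norm w) 0) as [Hn0|Hn0].
  - rewrite Hn0. eapply xle_trans; [|apply h_ge_neg]. rewrite Hn0. simpl. lra.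
  - assert (Hpos : norm w > 0) by (pose proof (norm_nonneg _ w); lra).
    assert (Hu := Hm _ (norm_normalize _ w Hpos)).
    destruct (h w) as [|a|] eqn:Ew; [exfalso; apply (h_notMInf w); auto| |simpl; auto].
    pose proof (h_homogeneous w (/ norm w) a ltac:(apply Rinv_0_lt_compat; auto) Ew) as Hh.
    pose proof (xle_trans _ _ _ Hu Hh) as Hle. simpl in Hle |- *.
    replace a with ((/ norm w) ^ 2 * a * norm w ^ 2) by (field; lra).
    apply Rmult_le_compat_r; nra.
Qed.

Lemma h_sphere_minimizer w1 c : norm w1 = 1 -> xle (h w1) (Fin c) ->
  exists w0 m, norm w0 = 1 /\ m <= c /\ h w0 = Fin m /\ forall w, xle (Fin (m * norm w ^ 2)) (h w).
Proof.
  intros Hw1 Hc.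
  set (S := fun s => exists w, norm w = 1 /\ s = h w).
  destruct (inf_exists S) as [mx [Hm1 Hm2]].
  assert (Hlb : xle (Fin (- r)) mx).
  { apply Hm2. intros s [w [Hw ->]]. eapply xle_trans; [|apply h_ge_neg]. rewrite Hw. simpl. lra. }
  assert (Hub : xle mx (Fin c)) by (apply xle_trans with (h w1); auto; apply Hm1; exists w1; auto).
  destruct mx as [|m|]; simpl in Hlb, Hub; try tauto.
  assert (Hseq : forall j, exists w, norm w = 1 /\ xle (h w) (Fin (m + tk j))).
  { intro j. destruct (inf_approx S m (tk j) (conj Hm1 Hm2) (tk_pos j)) as [s [[w [Hw ->]] Hs]].
    eauto. }
  destruct (choice _ Hseq) as [wj Hwj].
  destruct (bolzano_weierstrass n wj 1) as [phi [w0 [Hphi Hcv]]]; [intro k; destruct (Hwj k) as [-> _]; lra|].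
  assert (Hw0 : norm w0 = 1) by (apply (vconv_unit_limit _ _ _ Hcv); intro j; apply Hwj).
  assert (Hmin : forall w, norm w = 1 -> xle (Fin m) (h w)) by (intros w Hw; apply Hm1; exists w; auto).
  assert (Hm0 : h w0 = Fin m).
  { apply xle_antisym; [|apply Hmin; auto].
    apply h_lsc. intros dd Hdd. destruct (Hcv dd Hdd) as [N1 HN1].
    destruct (tk_cv dd Hdd) as [N2 HN2].
    set (j := max N1 N2). exists (wj (phi j)). split; [apply HN1; lia|].
    destruct (Hwj (phi j)) as [_ Hle]. eapply xle_trans; [exact Hle|]. simpl.
    specialize (HN2 (phi j)). unfold R_dist in HN2.
    rewrite Rminus_0_r, Rabs_right in HN2 by (apply Rle_ge, Rlt_le, tk_pos).
    assert (phi j >= N2)%nat by (pose proof (subseq_ge _ Hphi j); lia).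
    specialize (HN2 H). lra. }
  exists w0, m. split; auto. split; auto. split; auto. apply h_ge_of_sphere; auto.
Qed.

Section Penalization.

Variables (w0 : vec n) (m : R).
Hypothesis h_w0 : h w0 = Fin (m * norm w0 ^ 2).
Hypothesis h_min : forall w, xle (Fin (m * norm w ^ 2)) (h w).

(** Along [t_k -> 0] we minimize [f + pen k] over the ball of radius [t_k rad]
    around [xb]; the penalty is centered at [xb + t_k w0], with a weight
    [lam > m] making it strongly convex. *)
Definition rad := norm w0 + 1.
Definition lam := Rabs m + 1.
Definition tpen k := eps / (2 * rad) * tk k.
Definition qpen w := - m / 2 * norm w ^ 2 + lam / 2 * norm (vsub w w0) ^ 2.
Definition pen k x := - m / 2 * norm (vsub x xb) ^ 2
                      + lam / 2 * norm (vsub x (vadd xb (vscal (tpen k) w0))) ^ 2.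

Lemma rad_pos : rad > 0.
Proof. unfold rad. pose proof (norm_nonneg _ w0). lra. Qed.

Lemma lam_gt : lam > m /\ lam > 0.
Proof. unfold lam. pose proof (Rle_abs m). pose proof (Rabs_pos m). lra. Qed.

Lemma tpen_down : down_to_0 tpen.
Proof.
  apply down_scal; [|apply down_tk].
  apply Rdiv_lt_0_compat; [lra|pose proof rad_pos; lra].
Qed.

Lemma tpen_small k : tpen k * rad <= eps / 2.
Proof.
  unfold tpen. pose proof rad_pos. pose proof (tk_pos k). pose proof (tk_le1 k).
  replace (eps / (2 * rad) * tk k * rad) with (eps / 2 * tk k) by (field; lra). nra.
Qed.

Lemma pen_along k w : pen k (vadd xb (vscal (tpen k) w)) = tpen k ^ 2 * qpen w.
Proof.
  pose proof (proj1 tpen_down k). unfold pen, qpen. rewrite vsub_add_scal.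
  replace (vsub (vadd xb (vscal (tpen k) w)) (vadd xb (vscal (tpen k) w0)))
    with (vscal (tpen k) (vsub w w0)) by vext.
  rewrite !norm_scal, Rabs_right by lra. ring.
Qed.

Lemma pen_continuous k x eta : eta > 0 -> exists d, d > 0 /\
  forall y, norm (vsub y x) < d -> Rabs (pen k y - pen k x) < eta.
Proof.
  intros He. set (c := vadd xb (vscal (tpen k) w0)).
  destruct (sq_norm_continuous _ (vsub x xb) (- m / 2) (eta/2)) as [d1 [Hd1 H1]]; [lra|].
  destruct (sq_norm_continuous _ (vsub x c) (lam / 2) (eta/2)) as [d2 [Hd2 H2]]; [lra|].
  exists (Rmin d1 d2). split; [apply Rmin_pos; auto|]. intros y Hy.
  pose proof (Rmin_l d1 d2). pose proof (Rmin_r d1 d2).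
  specialize (H1 (vsub y xb)). specialize (H2 (vsub y c)).
  replace (vsub (vsub y xb) (vsub x xb)) with (vsub y x) in H1 by vext.
  replace (vsub (vsub y c) (vsub x c)) with (vsub y x) in H2 by vext.
  specialize (H1 ltac:(lra)). specialize (H2 ltac:(lra)). unfold pen. fold c.
  apply Rabs_def2 in H1. apply Rabs_def2 in H2. apply Rabs_def1; lra.
Qed.

Lemma penalized_min_exists k : exists xs, norm (vsub xs xb) <= tpen k * rad /\
  forall x, norm (vsub x xb) <= tpen k * rad -> xle (xaddr (f xs) (pen k xs)) (xaddr (f x) (pen k x)).
Proof.
  pose proof (proj1 tpen_down k). pose proof rad_pos. pose proof (tpen_small k).
  apply (lsc_min_on_ball n (fun x => xaddr (f x) (pen k x)) xb (tpen k * rad)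
           (fxb - (r / 2 + Rabs m / 2) * (tpen k * rad) ^ 2)).
  - apply lsc_add_continuous; auto. intros. apply pen_continuous; auto.
  - intros x Hx.
    (* prox-regularity at [(xb, 0)] bounds [f] below by [fxb - r/2 |x - xb|^2] *)
    assert (HP := prox x xb vzero fxb ltac:(lra) ltac:(rewrite vsub_self, norm_zero; lra) f_xb
      ltac:(rewrite Rminus_diag, Rabs_R0; lra) zero_subgrad ltac:(rewrite vsub_self, norm_zero; lra)).
    rewrite dot_zero_l in HP. unfold pen.
    pose proof (norm_nonneg _ (vsub x xb)). pose proof (norm_nonneg _ (vsub x (vadd xb (vscal (tpen k) w0)))).
    assert (norm (vsub x xb) ^ 2 <= (tpen k * rad) ^ 2) by nra.
    pose proof (Rle_abs m). pose proof (Rle_abs (-m)) as Hm'. rewrite Rabs_Ropp in Hm'.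
    assert (- m / 2 * norm (vsub x xb) ^ 2 >= - (Rabs m / 2) * (tpen k * rad) ^ 2) by nra.
    pose proof lam_gt. pose proof (pow2_ge_0 (norm (vsub x (vadd xb (vscal (tpen k) w0))))).
    destruct (f x); simpl in *; auto. nra.
  - exists xb. split; [rewrite vsub_self, norm_zero; nra|]. rewrite f_xb. discriminate.
Qed.

Definition xm k := proj1_sig (constructive_indefinite_description _ (penalized_min_exists k)).

Lemma xm_spec k : norm (vsub (xm k) xb) <= tpen k * rad /\
  forall x, norm (vsub x xb) <= tpen k * rad -> xle (xaddr (f (xm k)) (pen k (xm k))) (xaddr (f x) (pen k x)).
Proof. unfold xm. destruct (constructive_indefinite_description _ _). auto. Qed.

Definition wm k := vscal (/ tpen k) (vsub (xm k) xb).

Lemma wm_eq k : vadd xb (vscal (tpen k) (wm k)) = xm k.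
Proof.
  pose proof (proj1 tpen_down k).
  apply functional_extensionality; intro i. unfold wm, vadd, vscal, vsub. field. lra.
Qed.

Lemma wm_bound k : norm (wm k) <= rad.
Proof.
  pose proof (proj1 tpen_down k). destruct (xm_spec k) as [Hb _].
  unfold wm. rewrite norm_scal, Rabs_right by (apply Rle_ge, Rlt_le, Rinv_0_lt_compat; lra).
  apply Rle_trans with (/ tpen k * (tpen k * rad)); [|right; field; lra].
  apply Rmult_le_compat_l; [apply Rlt_le, Rinv_0_lt_compat|]; lra.
Qed.

Lemma penalized_quotient_bound k w p : norm w <= rad -> Q (tpen k) w = Fin p ->
  xle (Q (tpen k) (wm k)) (Fin (p + 2 * qpen w - 2 * qpen (wm k))).
Proof.
  intros Hw Ep. pose proof (proj1 tpen_down k) as Ht.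
  assert (Hball : norm (vsub (vadd xb (vscal (tpen k) w)) xb) <= tpen k * rad).
  { rewrite vsub_add_scal, norm_scal, Rabs_right by lra. apply Rmult_le_compat_l; lra. }
  destruct (xm_spec k) as [_ Hmk]. specialize (Hmk _ Hball).
  rewrite (Q_inv _ _ p Ht Ep), pen_along, <- (wm_eq k), pen_along in Hmk.
  destruct (f (vadd xb (vscal (tpen k) (wm k)))) as [|ym|] eqn:Efm; cbn [xaddr xle] in Hmk;
    [exfalso; eapply f_notMInf; eauto| |tauto].
  rewrite (Q_fin _ _ ym Ht Efm). simpl. apply Rdiv_le_of_mul; nra.
Qed.

Lemma h_le_at_cluster kap ws : subseq kap -> vconv (fun j => wm (kap j)) ws ->
  xle (h ws) (Fin (m * norm ws ^ 2 - lam * norm (vsub ws w0) ^ 2)).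
Proof.
  intros Hkap Hcw.
  destruct (h_attained w0 tpen tpen_down) as [w2 [Hw2 Hq2]]. rewrite h_w0 in Hq2.
  pose proof (vconv_subseq _ _ _ _ Hw2 Hkap) as Hw3.
  assert (Hq : Un_cv (fun j => 2 * qpen (w2 (kap j)) - 2 * qpen (wm (kap j))) (2 * qpen w0 - 2 * qpen ws)).
  { unfold qpen. apply CV_minus; apply CV_mult; try apply Un_cv_const; apply CV_plus;
      apply CV_mult; try apply Un_cv_const; apply norm_sq_cv; auto;
      apply vconv_sub; auto; apply vconv_const. }
  replace (m * norm ws ^ 2 - lam * norm (vsub ws w0) ^ 2)
    with (m * norm w0 ^ 2 + (2 * qpen w0 - 2 * qpen ws))
    by (unfold qpen; rewrite vsub_self, norm_zero; field).
  apply (h_le_of_limsup ws (fun j => tpen (kap j)) (fun j => wm (kap j)));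
    [intro; apply tpen_down|apply Un_cv_subseq; auto; apply tpen_down|exact Hcw|].
  intros eta Heta.
  destruct (Hq2 (eta/2)) as [N1 HN1]; [lra|]. destruct (Hq (eta/2)) as [N2 HN2]; [lra|].
  destruct (Hw3 1) as [N3 HN3]; [lra|].
  exists (max N1 (max N2 N3)). intros j Hj.
  assert (Hkj : (kap j >= N1)%nat) by (pose proof (subseq_ge _ Hkap j); lia).
  destruct (HN1 _ Hkj) as [pp [Epp Hpp]]. specialize (HN2 j ltac:(lia)). specialize (HN3 j ltac:(lia)).
  unfold R_dist in HN2. apply Rabs_def2 in HN2. apply Rabs_def2 in Hpp.
  eapply xle_trans; [apply (penalized_quotient_bound (kap j) (w2 (kap j)) pp); [|exact Epp]|].
  - apply norm_le_of_near in HN3. unfold rad. lra.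
  - simpl. lra.
Qed.

Lemma wm_converges : vconv wm w0.
Proof.
  apply (vconv_of_cluster_points _ wm rad w0 wm_bound). intros kap ws Hkap Hcw.
  pose proof (xle_trans _ _ _ (h_min ws) (h_le_at_cluster kap ws Hkap Hcw)) as Hle. simpl in Hle.
  pose proof lam_gt. pose proof (pow2_ge_0 (norm (vsub ws w0))).
  assert (Hz : norm (vsub ws w0) ^ 2 = 0) by nra.
  pose proof (norm_nonneg _ (vsub ws w0)).
  apply vsub_eq0, norm_eq0. apply Rle_antisym; nra.
Qed.

(** The penalty gradients [t_k zpen k] are subgradients of [f] at [xm k]. *)
Definition zpen k := vsub (vscal m (wm k)) (vscal lam (vsub (wm k) w0)).

Lemma penalized_subgradient k : norm (vsub (wm k) w0) < 1/2 ->
  subdiff f (vadd xb (vscal (tpen k) (wm k))) (vscal (tpen k) (zpen k)).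
Proof.
  intros Hk. pose proof (proj1 tpen_down k) as Ht. pose proof lam_gt.
  set (c := vadd xb (vscal (tpen k) w0)).
  assert (Ev : vscal (tpen k) (zpen k) = vsub (vscal m (vsub (xm k) xb)) (vscal lam (vsub (xm k) c))).
  { rewrite <- (wm_eq k). unfold zpen, c. vext. }
  assert (Ea : vsub (xm k) xb = vscal (tpen k) (wm k)) by (rewrite <- (wm_eq k); apply vsub_add_scal).
  rewrite (wm_eq k), Ev. destruct (xm_spec k) as [_ Hmk].
  pose proof (Hmk xb ltac:(rewrite vsub_self, norm_zero; pose proof rad_pos; nra)) as Hm0.
  rewrite f_xb in Hm0.
  destruct (f (xm k)) as [|ym|] eqn:Efm; cbn [xaddr xle] in Hm0; [exfalso; eapply f_notMInf; eauto| |tauto].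
  apply (subdiff_of_quadratic_minorant n f (xm k) ym _ ((lam - m)/2) (tpen k / 2)); auto; [lra|lra|].
  intros y Hy.
  assert (Hyb : norm (vsub y xb) <= tpen k * rad).
  { pose proof (norm_sub_triangle _ y (xm k) xb). rewrite Ea, norm_scal, Rabs_right in * by lra.
    apply norm_le_of_near in Hk. unfold rad. nra. }
  specialize (Hmk y Hyb).
  destruct (f y) as [|fy|]; cbn [xaddr xle] in Hmk |- *; [tauto| |auto].
  set (a := vsub (xm k) xb). set (b := vsub (xm k) c). set (d := vsub y (xm k)).
  assert (Epen : pen k y = pen k (xm k) - m * dot a d + lam * dot b d + (lam - m) / 2 * norm d ^ 2).
  { unfold pen. fold c a b. replace (vsub y xb) with (vadd a d) by (unfold a, d; vext).
    replace (vsub y c) with (vadd b d) by (unfold b, d; vext). rewrite !norm_add_sq. field. }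
  rewrite dot_sub_l, !dot_scal_l. fold d. lra.
Qed.

Lemma gder_of_h_minimizer : gder f xb vzero w0 (vscal m w0).
Proof.
  destruct (wm_converges (1/2)) as [K HK]; [lra|].
  apply (gder_of_eventually n f xb w0 (vscal m w0) tpen wm zpen K tpen_down wm_converges).
  - replace (vscal m w0) with (vsub (vscal m w0) (vscal lam (vsub w0 w0))) by vext.
    apply vconv_sub; apply vconv_scal_const; auto using wm_converges.
    apply vconv_sub; auto using wm_converges, vconv_const.
  - intros k Hk. apply penalized_subgradient, HK, Hk.
Qed.

End Penalization.

Lemma gder_unit_of_no_growth (kap : nat -> R) ka : Un_cv kap ka -> (forall k, ~ growth (kap k)) ->
  exists w0 m, norm w0 = 1 /\ m <= ka /\ gder f xb vzero w0 (vscal m w0).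
Proof.
  intros Hk Hn.
  destruct (h_small_of_no_growth kap ka Hk (fun k => no_growth_points (kap k) (Hn k) k)) as [w1 [Hw1 Hle]].
  destruct (h_sphere_minimizer w1 ka Hw1 Hle) as [w0 [m [Hw0 [Hm [Ew0 Hall]]]]].
  exists w0, m. split; auto. split; auto. apply gder_of_h_minimizer; auto.
  rewrite Ew0, Hw0. f_equal. ring.
Qed.

Lemma iii_implies_i :
  (forall w z, gder_dom f xb vzero w -> w <> vzero -> gder f xb vzero w z -> dot z w > 0) ->
  strong_local_min f xb.
Proof.
  intro Hiii. apply NNPP. intro Hn.
  destruct (gder_unit_of_no_growth tk 0 tk_cv) as [w0 [m [Hw0 [Hm Hg]]]].
  { intros k Hgr. apply Hn. exists (tk k). split; [apply tk_pos|]. apply strong_min_mod_growth; auto. }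
  specialize (Hiii w0 (vscal m w0) ltac:(exists (vscal m w0); auto) (unit_neq0 _ _ Hw0) Hg).
  rewrite dot_unit in Hiii; auto. lra.
Qed.

Lemma i_implies_iv : strong_local_min f xb -> exists c, c > 0 /\
  forall w z, gder_dom f xb vzero w -> gder f xb vzero w z -> dot z w >= c * (norm w) ^ 2.
Proof.
  intros [kap [Hk Hs]]. exists kap. split; auto. intros w z _.
  apply gder_dot_ge_of_growth, strong_min_mod_growth; auto.
Qed.

Lemma iv_implies_iii : (exists c, c > 0 /\
    forall w z, gder_dom f xb vzero w -> gder f xb vzero w z -> dot z w >= c * (norm w) ^ 2) ->
  forall w z, gder_dom f xb vzero w -> w <> vzero -> gder f xb vzero w z -> dot z w > 0.
Proof.
  intros [c [Hc Hiv]] w z Hd Hw Hg. specialize (Hiv w z Hd Hg). pose proof (norm_pos _ w Hw).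
  assert (c * norm w ^ 2 > 0) by (apply Rmult_lt_0_compat; auto; apply pow_lt; auto). lra.
Qed.

Lemma i_implies_ii : strong_local_min f xb ->
  local_min f xb /\ strong_metric_subreg (subdiff f) xb vzero.
Proof.
  intro Hi. destruct (i_implies_iv Hi) as [c [Hc Hiv]].
  destruct Hi as [kap [Hk Hs]]. apply strong_min_mod_growth in Hs as Hgr. destruct Hgr as [d0 [Hd0 Hgr]].
  split.
  { exists d0. split; auto. intros x Hx. rewrite f_xb. eapply xle_trans; [|apply Hgr; auto].
    simpl. pose proof (pow2_ge_0 (norm (vsub x xb))). nra. }
  assert (Hker : forall w, gder f xb vzero w vzero -> w = vzero).
  { intros w Hg. specialize (Hiv w vzero ltac:(exists vzero; auto) Hg).
    rewrite dot_zero_l in Hiv. apply norm_eq0. pose proof (norm_nonneg _ w).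
    apply Rle_antisym; [|lra]. apply Rnot_lt_le. intro Hpos.
    assert (c * norm w ^ 2 > 0) by (apply Rmult_lt_0_compat; auto; apply pow_lt; auto). lra. }
  destruct (subdiff_estimate_of_kernel n f xb Hker) as [kk [dd [Hkk [Hdd Hest]]]].
  apply (strong_metric_subreg_of_estimate n (subdiff f) xb vzero kk dd zero_subgrad Hkk Hdd).
  intros x Hx v Hv. rewrite (norm_sub_sym _ vzero v), vsub_zero_r. auto.
Qed.

Lemma ii_implies_iii : local_min f xb /\ strong_metric_subreg (subdiff f) xb vzero ->
  forall w z, gder_dom f xb vzero w -> w <> vzero -> gder f xb vzero w z -> dot z w > 0.
Proof.
  intros [Hlm Hsub] w z _ Hw Hg. apply Rnot_le_lt. intro Hle.
  assert (Hker : forall w, gder f xb vzero w vzero -> w = vzero).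
  { apply subdiff_estimate_kernel.
    destruct (estimate_of_strong_metric_subreg n _ _ _ Hsub) as [kk [dd [Hkk [Hdd Hest]]]].
    exists kk, dd. split; auto. split; auto. intros x Hx v Hv.
    specialize (Hest x Hx v Hv). rewrite (norm_sub_sym _ vzero v), vsub_zero_r in Hest. exact Hest. }
  (* local minimality gives [h >= 0], while (A) gives [h w <= <z,w> <= 0] *)
  assert (Hnonneg : forall w', xle (Fin (0 * norm w' ^ 2)) (h w')).
  { apply h_ge_of_growth. destruct Hlm as [d [Hd Hl]]. exists d. split; auto.
    intros x Hx. specialize (Hl x Hx). rewrite f_xb in Hl. eapply xle_trans; [|exact Hl]. simpl. lra. }
  destruct (h_le_dot w z Hg) as [a [Ea Ha]].
  pose proof (Hnonneg w) as Hw0. rewrite Ea in Hw0. simpl in Hw0.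
  (* so [w] minimizes [h] with value [0], and (B) puts [0] in [D(subdiff f)(xb|0)(w)] *)
  assert (Hg0 : gder f xb vzero w (vscal 0 w)) by (apply gder_of_h_minimizer; auto; rewrite Ea; f_equal; lra).
  replace (vscal 0 w) with (@vzero n) in Hg0 by vext.
  exact (Hw (Hker w Hg0)).
Qed.

Lemma QG_formula : strong_local_min f xb -> forall q r', is_QG f xb q ->
  is_inf (fun s => exists w z, gder f xb vzero w z /\ s = ratio z w) r' -> q = r'.
Proof.
  intros [k0 [Hk0 Hs0]] q r' [Hq1 Hq2] [Hr1 Hr2].
  (* every modulus bounds every ratio *)
  assert (Hqr : xle q r').
  { apply Hq2. intros s [kap [Hkap [Hsm ->]]]. apply Hr2. intros s [w [z [Hg ->]]]. unfold ratio.
    destruct (Req_EM_T (norm w) 0); simpl; auto.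
    pose proof (gder_dot_ge_of_growth kap (proj1 (strong_min_mod_growth kap) Hsm) w z Hg).
    pose proof (norm_nonneg _ w). apply Rle_div_of_mul; [|lra]. assert (norm w > 0) by lra. nra. }
  assert (Hk0q : xle (Fin k0) q) by (apply Hq1; exists k0; auto).
  apply xle_antisym; auto.
  destruct q as [|Qv|]; simpl in Hk0q; try tauto; [|apply xle_PInf].
  apply NNPP. intro Hn.
  (* otherwise some [k1 > QG] is not a modulus, yet [k1] is below every ratio *)
  assert (exists k1 k2, Qv < k1 < k2 /\ xle (Fin k2) r') as [k1 [k2 [Hk12 Hk2]]].
  { destruct r' as [|R0|]; simpl in Hn.
    - exfalso; apply Hn; simpl; auto.
    - exists (Qv + (R0 - Qv)/3), (Qv + 2*(R0-Qv)/3). split; [lra|simpl; lra].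
    - exists (Qv+1), (Qv+2). split; [lra|simpl; auto]. }
  assert (Hns : ~ growth k1).
  { intro Hgr. assert (Hle : xle (Fin k1) (Fin Qv)).
    { apply Hq1. exists k1. split; [lra|]. split; auto. apply strong_min_mod_growth; auto. }
    simpl in Hle. lra. }
  destruct (gder_unit_of_no_growth (fun _ => k1) k1 (Un_cv_const k1) (fun _ => Hns))
    as [w0 [m [Hw0 [Hm Hg]]]].
  assert (Hrr : xle r' (ratio (vscal m w0) w0)) by (apply Hr1; exists w0, (vscal m w0); auto).
  unfold ratio in Hrr. destruct (Req_EM_T (norm w0) 0); [lra|].
  rewrite dot_unit, Hw0 in Hrr; auto.
  pose proof (xle_trans _ _ _ Hk2 Hrr) as Hfin. simpl in Hfin.
  replace (m / 1 ^ 2) with m in Hfin by field. lra.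
Qed.

Lemma second_order_characterization :
  let i := strong_local_min f xb in
  let ii := local_min f xb /\ strong_metric_subreg (subdiff f) xb vzero in
  let iii := forall w z, gder_dom f xb vzero w -> w <> vzero ->
               gder f xb vzero w z -> dot z w > 0 in
  let iv := exists c, c > 0 /\ forall w z, gder_dom f xb vzero w ->
               gder f xb vzero w z -> dot z w >= c * (norm w) ^ 2 in
  ((i <-> ii) /\ (i <-> iii) /\ (i <-> iv)) /\
  ((i \/ ii \/ iii \/ iv) ->
     forall q r, is_QG f xb q ->
       is_inf (fun s => exists w z, gder f xb vzero w z /\ s = ratio z w) r ->
       q = r).
Proof.
  intros i ii iii iv.
  assert (Hi : i \/ ii \/ iii \/ iv -> i).
  { intros [H|[H|[H|H]]]; [exact H|exact (iii_implies_i (ii_implies_iii H))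
    |exact (iii_implies_i H)|exact (iii_implies_i (iv_implies_iii H))]. }
  split; [split; [|split]|intro H; apply QG_formula, Hi, H].
  - split; [exact i_implies_ii|auto].
  - split; [intro H; exact (iv_implies_iii (i_implies_iv H))|auto].
  - split; [exact i_implies_iv|auto].
Qed.

End SecondSubderivative.

Theorem theorem3p8 (n : nat) (f : vec n -> xreal) (xb : vec n) :
  proper f -> lsc f -> dom f xb -> subdiff f xb vzero ->
  subdiff_continuous f xb vzero -> prox_regular f xb vzero ->
  twice_epi_diff f xb vzero ->
  let i := strong_local_min f xb in
  let ii := local_min f xb /\ strong_metric_subreg (subdiff f) xb vzero in
  let iii := forall w z, gder_dom f xb vzero w -> w <> vzero ->
               gder f xb vzero w z -> dot z w > 0 in
  let iv := exists c, c > 0 /\ forall w z, gder_dom f xb vzero w ->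
               gder f xb vzero w z -> dot z w >= c * (norm w) ^ 2 in
  ((i <-> ii) /\ (i <-> iii) /\ (i <-> iv)) /\
  ((i \/ ii \/ iii \/ iv) ->
     forall q r, is_QG f xb q ->
       is_inf (fun s => exists w z, gder f xb vzero w z /\ s = ratio z w) r ->
       q = r).
Proof.
  intros [f_notMInf _] f_lsc _ zero_subgrad [fx1 [Hfx1 subdiff_cont]]
    [fxb [f_xb [r [eps [r_pos [eps_pos prox]]]]]] [fx2 [Hfx2 epi_diff]].
  (* the three regularity assumptions refer to the same value [f xb] *)
  rewrite f_xb in Hfx1, Hfx2. injection Hfx1 as <-. injection Hfx2 as <-.
  exact (second_order_characterization n f xb fxb f_xb f_notMInf f_lsc zero_subgrad
           r eps r_pos eps_pos prox subdiff_cont epi_diff).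
Qed.
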